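(* Let $s\in(0,1)$ and $F\in\mathcal M_s$. Suppose that for some $\gamma>0$ one has $\int_\gamma F(x)x^k=0$ for all $k\in\mathbb Z_{\ge0}$. Then $F=0$.
   Context: Fix $q\in(0,1)$. Notation: $(a;q)_\infty=\prod_{j\ge0}(1-aq^j)$, $e_q(x)=1/(x;q)_\infty$. For $\gamma>0$, $\int_\gamma f=(1-q)\sum_{k\in\mathbb Z}\sum_{\epsilon=\pm1}q^k\gamma f(\epsilon q^k\gamma)$ whenever absolutely convergent. For $s>0$, $\mathcal M_s$ is the set of functions $F(x)=f(x)e_{q^2}(-x^2)$ (holomorphic on $|\mathrm{Im}\,x|<1$) where $f(x)=\sum_{l\ge0}a_lx^l$ with $|a_l|\le Cs^lq^{l^2/2}$ for all $l$, for some $C>0$. *)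

From Stdlib Require Import Reals ZArith.
From Coquelicot Require Import Coquelicot.
Open Scope R_scope.

Fixpoint cpow (z : C) (n : nat) : C :=
  match n with O => RtoC 1 | S m => Cmult (cpow z m) z end.

Fixpoint qpoch_n (a : C) (q : R) (n : nat) : C :=
  match n with
  | O => RtoC 1
  | S m => Cmult (qpoch_n a q m) (Cminus (RtoC 1) (Cmult a (RtoC (q ^ m))))
  end.

Definition qpoch_inf (a : C) (q : R) : C :=
  (real (Lim_seq (fun n => Re (qpoch_n a q n))),
   real (Lim_seq (fun n => Im (qpoch_n a q n)))).

Definition e_q (q : R) (x : C) : C := Cinv (qpoch_inf x q).

Definition CSeries (u : nat -> C) : C :=
  (Series (fun n => Re (u n)), Series (fun n => Im (u n))).

Definition powser (a : nat -> C) (z : C) : C :=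
  CSeries (fun l => Cmult (a l) (cpow z l)).

Definition MF (q : R) (a : nat -> C) (z : C) : C :=
  Cmult (powser a z) (e_q (q ^ 2) (Copp (Cmult z z))).

Definition Ms_coeff_bound (q s Cst : R) (a : nat -> C) : Prop :=
  forall l : nat, Cmod (a l) <= Cst * s ^ l * Rpower q (INR (l * l) / 2).

Definition jterm (q g0 : R) (g : R -> C) (k : Z) : C :=
  let x := powerRZ q k * g0 in
  Cmult (RtoC x) (Cplus (g x) (g (- x))).

Definition jterm_abs (q g0 : R) (g : R -> C) (k : Z) : R :=
  let x := powerRZ q k * g0 in
  Rabs x * (Cmod (g x) + Cmod (g (- x))).

Definition jackson_abs_conv (q g0 : R) (g : R -> C) : Prop :=
  ex_series (fun n => jterm_abs q g0 g (Z.of_nat n)) /\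
  ex_series (fun n => jterm_abs q g0 g (- Z.of_nat (S n))%Z).

(* int_gamma g = (1-q) sum_{k in Z} sum_eps q^k gamma g(eps q^k gamma) *)
Definition jackson (q g0 : R) (g : R -> C) : C :=
  Cmult (RtoC (1 - q))
    (Cplus (CSeries (fun n => jterm q g0 g (Z.of_nat n)))
           (CSeries (fun n => jterm q g0 g (- Z.of_nat (S n))%Z))).

(* On the real axis F(x) = f(x) w(x), where w(x) = e_{q^2}(-x^2) is positive and satisfies
   w(q x) = (1 + x^2) w(x).  Expanding f and exchanging the sums, the vanishing Jackson moments
   read sum_l a_l (1 + (-1)^(l+k)) A_(l+k) = 0, where A_m, the Jackson sum of x^(m+1) w(x) over the
   positive points, is positive and satisfies A_(m+2) = (q^-(m+1) - 1) A_m.  Hence for each parity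
   r the coefficients c_i = a_(2i+r) satisfy sum_i c_i nu_i(q^-2(p+r)) = 0 for all p, where
   nu_i(u) = prod_(j<i) (u / q^(2j+1) - 1).  Weighting these relations by the Taylor coefficients
   of the Euler product (Q x; Q)_oo, Q = q^2, which vanishes on the grid Q^-(p+r), a partial
   fraction argument yields sum_i c_i nu_i(z) = 0 for every z in (0,1).  At z = q^(2n+1) the sum
   is triangular, so all c_n vanish.  The Gaussian decay of the a_l justifies every exchange of
   summations. *)

From Stdlib Require Import Reals ZArith Lra Lia.
From Coquelicot Require Import Coquelicot.
Open Scope R_scope.

Section NonnegSeries.

Variable a : nat -> R.
Hypothesis a_ge0 : forall n, 0 <= a n.

Lemma sum_n_ge0 N : 0 <= sum_n a N.
Proof.
  induction N as [|N IH]; [rewrite sum_O | rewrite sum_Sn]; auto.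
  pose proof (a_ge0 (S N)); unfold plus; simpl; lra.
Qed.

Lemma ex_series_Series_le_of_sum_n_le B :
  (forall N, sum_n a N <= B) -> ex_series a /\ Series a <= B.
Proof.
  intros HB.
  destruct (ex_finite_lim_seq_incr (sum_n a) B) as [l Hl]; auto.
  { intros n; rewrite sum_Sn; pose proof (a_ge0 (S n)); unfold plus; simpl; lra. }
  split; [exists l; exact Hl|].
  rewrite (is_series_unique a l Hl).
  exact (is_lim_seq_le _ _ _ _ HB Hl (is_lim_seq_const B)).
Qed.

Lemma sum_n_le_Series N : ex_series a -> sum_n a N <= Series a.
Proof.
  intros [l Hl]; rewrite (is_series_unique a l Hl).
  apply (is_lim_seq_incr_compare (sum_n a) l Hl).
  intros n; rewrite sum_Sn; pose proof (a_ge0 (S n)); unfold plus; simpl; lra.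
Qed.

Lemma term_le_Series N : ex_series a -> a N <= Series a.
Proof.
  intros Ha; eapply Rle_trans; [|exact (sum_n_le_Series N Ha)].
  destruct N as [|N]; [rewrite sum_O; lra|].
  rewrite sum_Sn; pose proof (sum_n_ge0 N); unfold plus; simpl; lra.
Qed.

Lemma Series_ge0 : ex_series a -> 0 <= Series a.
Proof. intros Ha; exact (Rle_trans _ _ _ (a_ge0 0) (term_le_Series 0 Ha)). Qed.

End NonnegSeries.

Lemma Series_sum_n_swap (u : nat -> nat -> R) N :
  (forall j, ex_series (u j)) ->
  ex_series (fun i => sum_n (fun j => u j i) N) /\
  Series (fun i => sum_n (fun j => u j i) N) = sum_n (fun j => Series (u j)) N.
Proof.
  intros Hu; induction N as [|N [IHex IHeq]].
  - rewrite sum_O; split; [apply (ex_series_ext (u 0%nat))|apply Series_ext];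
      intros; rewrite ?sum_O; auto.
  - assert (E : forall i, sum_n (fun j => u j i) (S N) = sum_n (fun j => u j i) N + u (S N) i)
      by (intros; rewrite sum_Sn; reflexivity).
    split; [apply (ex_series_ext _ _ (fun i => eq_sym (E i))); apply (ex_series_plus (V := R_NormedModule)); auto|].
    rewrite (Series_ext _ _ E), Series_plus, IHeq, sum_Sn; auto.
Qed.

Lemma Series_Series_swap_ge0 (v : nat -> nat -> R) :
  (forall i j, 0 <= v i j) -> (forall i, ex_series (v i)) ->
  ex_series (fun i => Series (v i)) ->
  (forall j, ex_series (fun i => v i j)) /\
  ex_series (fun j => Series (fun i => v i j)) /\
  Series (fun j => Series (fun i => v i j)) = Series (fun i => Series (v i)).
Proof.
  intros Hv Hrow Hsum.
  assert (Hcol : forall j, ex_series (fun i => v i j)).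
  { intros j; apply (ex_series_le (fun i => v i j) (fun i => Series (v i))); auto.
    intros i; rewrite Rabs_pos_eq by auto; apply term_le_Series; auto. }
  assert (Hrow0 : forall i, 0 <= Series (v i)) by (intros; apply Series_ge0; auto).
  assert (Hcol0 : forall j, 0 <= Series (fun i => v i j))
    by (intros j; apply (Series_ge0 (fun i => v i j)); auto).
  destruct (ex_series_Series_le_of_sum_n_le (fun j => Series (fun i => v i j)) Hcol0
              (Series (fun i => Series (v i)))) as [Hex Hle].
  { intros N; destruct (Series_sum_n_swap (fun j i => v i j) N Hcol) as [_ <-].
    apply Series_le; auto; intros i; split.
    - apply (sum_n_ge0 (fun j => v i j)); auto.
    - apply sum_n_le_Series; auto. }
  destruct (ex_series_Series_le_of_sum_n_le (fun i => Series (v i)) Hrow0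
              (Series (fun j => Series (fun i => v i j)))) as [_ Hge].
  { intros N; destruct (Series_sum_n_swap v N Hrow) as [_ <-].
    apply Series_le; auto; intros j; split.
    - apply (sum_n_ge0 (fun i => v i j)); auto.
    - apply (sum_n_le_Series (fun i => v i j)); auto. }
  repeat split; auto; lra.
Qed.

(* Dominated Fubini: apply the nonnegative case to [v + u] and to [v]. *)
Lemma Series_Series_swap (u v : nat -> nat -> R) :
  (forall i j, Rabs (u i j) <= v i j) -> (forall i, ex_series (v i)) ->
  ex_series (fun i => Series (v i)) ->
  (forall j, ex_series (fun i => u i j)) /\
  ex_series (fun j => Series (fun i => u i j)) /\
  Series (fun j => Series (fun i => u i j)) = Series (fun i => Series (u i)).
Proof.
  intros Huv Hrow Hsum.
  set (w := fun i j => v i j + u i j).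
  assert (Hv0 : forall i j, 0 <= v i j) by (intros i j; exact (Rle_trans _ _ _ (Rabs_pos _) (Huv i j))).
  assert (Hw0 : forall i j, 0 <= w i j)
    by (intros i j; pose proof (proj1 (Rabs_le_between _ _) (Huv i j)); unfold w; lra).
  assert (Hurow : forall i, ex_series (u i)) by (intros i; apply (ex_series_le (u i) (v i)); auto).
  assert (Hwrow : forall i, ex_series (w i))
    by (intros i; apply (ex_series_plus (V := R_NormedModule)); auto).
  assert (Hu_le : forall i, Rabs (Series (u i)) <= Series (v i)).
  { intros i; eapply Rle_trans; [apply Series_Rabs|apply Series_le; auto].
    - apply (ex_series_le (fun n => Rabs (u i n)) (v i)); auto; intros; rewrite Rabs_Rabsolu; auto.
    - intros; split; [apply Rabs_pos|auto]. }
  assert (Hwsum : ex_series (fun i => Series (w i))).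
  { apply (ex_series_le (fun i => Series (w i)) (fun i => 2 * Series (v i))).
    - intros i; unfold w; rewrite Series_plus, Rabs_pos_eq; auto;
        pose proof (proj1 (Rabs_le_between _ _) (Hu_le i)); lra.
    - apply (ex_series_scal_l (V := R_NormedModule)); auto. }
  destruct (Series_Series_swap_ge0 v Hv0 Hrow Hsum) as [Vcol [Vsum Veq]].
  destruct (Series_Series_swap_ge0 w Hw0 Hwrow Hwsum) as [Wcol [Wsum Weq]].
  assert (Eu : forall i, Series (u i) = Series (w i) - Series (v i))
    by (intros; rewrite <- Series_minus by auto; apply Series_ext; intros; unfold w; ring).
  assert (Eucol : forall j, Series (fun i => u i j) = Series (fun i => w i j) - Series (fun i => v i j))
    by (intros j; rewrite <- Series_minus by auto; apply Series_ext; intros; unfold w; ring).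
  assert (Hucol : forall j, ex_series (fun i => u i j))
    by (intros j; apply (ex_series_le (fun i => u i j) (fun i => v i j)); auto).
  repeat split; auto.
  - apply (ex_series_ext (V := R_NormedModule) (fun j => Series (fun i => w i j) + - Series (fun i => v i j))).
    + intros j; apply eq_sym, Eucol.
    + apply (ex_series_plus (V := R_NormedModule)); auto.
      apply (ex_series_opp (V := R_NormedModule)); auto.
  - rewrite (Series_ext _ _ Eucol), (Series_ext _ _ Eu), !Series_minus; auto; lra.
Qed.

Lemma ex_series_Series_prod (x y : nat -> R) : ex_series x -> ex_series y ->
  (forall n, ex_series (fun l => x n * y l)) /\ ex_series (fun n => Series (fun l => x n * y l)).
Proof.
  intros Hx Hy; split; [intros n; apply (ex_series_scal_l (V := R_NormedModule)); exact Hy|].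
  assert (E : forall n, x n * Series y = Series (fun l => x n * y l)) by (intros; rewrite Series_scal_l; reflexivity).
  apply (ex_series_ext _ _ E).
  apply (ex_series_ext (fun n => Series y * x n)); [intros; apply Rmult_comm|].
  apply (ex_series_scal_l (V := R_NormedModule)); exact Hx.
Qed.

Lemma is_series_single (f : nat -> R) n :
  (forall i, i <> n -> f i = 0) -> is_series f (f n).
Proof.
  intros Hf.
  assert (Hpart : forall N, (n <= N)%nat -> sum_n f N = f n).
  { assert (Hbefore : forall N, (N < n)%nat -> sum_n f N = 0).
    { induction N as [|N IH]; intros HN; [rewrite sum_O|rewrite sum_Sn, IH by lia];
        rewrite ?Hf by lia; unfold plus; simpl; ring. }
    intros N HN; induction HN as [|N HN IH].
    - destruct n as [|n]; [apply sum_O|].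
      rewrite sum_Sn, Hbefore by lia; unfold plus; simpl; ring.
    - rewrite sum_Sn, IH, (Hf (S N)) by lia; unfold plus; simpl; ring. }
  apply (is_lim_seq_ext_loc (fun _ => f n) (sum_n f) (f n)); [|apply is_lim_seq_const].
  exists n; intros N HN; symmetry; apply Hpart; exact HN.
Qed.

Lemma Series_zero : Series (fun _ : nat => 0) = 0.
Proof. exact (is_series_unique _ _ (is_series_single (fun _ => 0) 0 (fun _ _ => eq_refl))). Qed.

Lemma sum_n_even_odd (u : nat -> R) N :
  sum_n u (2 * N + 1) = sum_n (fun i => u (2 * i)%nat) N + sum_n (fun i => u (2 * i + 1)%nat) N.
Proof.
  induction N as [|N IH].
  - rewrite !sum_O; change (2 * 0 + 1)%nat with 1%nat; rewrite sum_Sn, sum_O; reflexivity.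
  - replace (2 * S N + 1)%nat with (S (S (2 * N + 1))) by lia.
    rewrite !sum_Sn, IH.
    replace (S (S (2 * N + 1))) with (2 * S N + 1)%nat by lia.
    replace (S (2 * N + 1)) with (2 * S N)%nat by lia.
    unfold plus; simpl; ring.
Qed.

Lemma sum_n_zero N : sum_n (fun _ => 0) N = 0.
Proof.
  induction N as [|N IH]; [apply sum_O|rewrite sum_Sn, IH]; unfold plus; simpl; ring.
Qed.

Lemma is_series_of_odd_partial_sums (u v : nat -> R) l :
  (forall N, sum_n v N = sum_n u (2 * N + 1)) -> is_series u l -> is_series v l.
Proof.
  intros Hv Hu; apply (is_lim_seq_ext (fun N => sum_n u (2 * N + 1)) (sum_n v) l); [intros; symmetry; apply Hv|].
  apply (is_lim_seq_subseq (sum_n u) l (fun N => (2 * N + 1)%nat)); [|exact Hu].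
  apply eventually_subseq; intros; lia.
Qed.

Lemma Series_parity_terms (u : nat -> R) r0 : (r0 <= 1)%nat -> ex_series u ->
  (forall i, u (2 * i + (1 - r0))%nat = 0) -> Series (fun i => u (2 * i + r0)%nat) = Series u.
Proof.
  intros Hr0 [l Hl] Hzero; rewrite (is_series_unique u l Hl); apply is_series_unique.
  apply (is_series_of_odd_partial_sums u); auto; intros N.
  rewrite sum_n_even_odd.
  destruct r0 as [|[|r0]]; [| |lia].
  - rewrite (sum_n_ext (fun i => u (2 * i + 1)%nat) (fun _ => 0)), sum_n_zero by exact Hzero.
    rewrite Rplus_0_r; apply sum_n_ext; intros; rewrite Nat.add_0_r; reflexivity.
  - rewrite (sum_n_ext (fun i => u (2 * i)%nat) (fun _ => 0)), sum_n_zero, Rplus_0_l;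
      [reflexivity|intros i; rewrite <- (Nat.add_0_r (2 * i)); exact (Hzero i)].
Qed.

Lemma pow_le_1 (x : R) n : 0 <= x <= 1 -> x ^ n <= 1.
Proof.
  intros Hx; induction n as [|n IH]; simpl; [lra|].
  pose proof (pow_le x n (proj1 Hx)); nra.
Qed.

Lemma pow_le_pow_anti (x : R) m n : 0 <= x <= 1 -> (m <= n)%nat -> x ^ n <= x ^ m.
Proof.
  intros Hx Hmn; replace n with (m + (n - m))%nat by lia; rewrite pow_add.
  pose proof (pow_le x m (proj1 Hx)); pose proof (pow_le_1 x (n - m) Hx).
  pose proof (pow_le x (n - m) (proj1 Hx)); nra.
Qed.

Lemma pow_lt_pow_anti (x : R) m n : 0 < x < 1 -> (m < n)%nat -> x ^ n < x ^ m.
Proof.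
  intros Hx Hmn; replace n with (m + (n - m))%nat by lia; rewrite pow_add.
  pose proof (pow_lt x m (proj1 Hx)).
  pose proof (pow_lt_1_compat x (n - m) ltac:(lra) ltac:(lia)); nra.
Qed.

Lemma gaussian_bounded (t b : R) : 0 < t < 1 -> 0 < b ->
  exists M, 0 < M /\ forall d : nat, b ^ d * t ^ (d * d) <= M.
Proof.
  intros Ht Hb.
  destruct (pow_lt_1_zero t ltac:(rewrite Rabs_pos_eq; lra) (/ b) ltac:(apply Rinv_0_lt_compat; lra))
    as [T HT].
  assert (Hmax : 1 <= Rmax 1 b) by apply Rmax_l.
  exists (Rmax 1 b ^ T); split; [apply pow_lt; lra|].
  intros d; destruct (le_lt_dec T d) as [Hd|Hd].
  - specialize (HT d Hd); rewrite Rabs_pos_eq in HT by (apply pow_le; lra).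
    assert (Hbt : 0 <= b * t ^ d <= 1).
    { pose proof (pow_le t d ltac:(lra)).
      apply (Rmult_lt_compat_l b) in HT; [rewrite Rinv_r in HT|]; nra. }
    rewrite pow_mult, <- Rpow_mult_distr.
    exact (Rle_trans _ _ _ (pow_le_1 _ d Hbt) (pow_R1_Rle _ T Hmax)).
  - assert (H1 : t ^ (d * d) <= 1) by (apply pow_le_1; lra).
    assert (H2 : b ^ d <= Rmax 1 b ^ d) by (apply pow_incr; split; [lra|apply Rmax_r]).
    assert (H3 : Rmax 1 b ^ d <= Rmax 1 b ^ T) by (apply Rle_pow; [exact Hmax|lia]).
    pose proof (pow_le b d ltac:(lra)); pose proof (pow_le t (d * d) ltac:(lra)); nra.
Qed.

(* Completing the square: [l^2 + a^2 = 2 a l + (l - a)^2]. *)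
Lemma gaussian_square_bound (t b : R) : 0 < t < 1 -> 0 < b ->
  exists M, 0 < M /\
    forall l a : nat, b ^ l * t ^ (l * l) * t ^ (a * a) <= M * b ^ a * t ^ (2 * a * l).
Proof.
  intros Ht Hb.
  destruct (gaussian_bounded t b Ht Hb) as [M1 [HM1 H1]].
  destruct (gaussian_bounded t (/ b) Ht ltac:(apply Rinv_0_lt_compat; lra)) as [M2 [HM2 H2]].
  exists (M1 + M2); split; [lra|]; intros l a.
  assert (Hpos : 0 < b ^ a * t ^ (2 * a * l)) by (apply Rmult_lt_0_compat; apply pow_lt; lra).
  assert (HM : forall d, b ^ d * t ^ (d * d) <= M1 + M2 /\ (/ b) ^ d * t ^ (d * d) <= M1 + M2).
  { intros d; pose proof (H1 d); pose proof (H2 d); split.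
    - pose proof (pow_le (/ b) d ltac:(apply Rlt_le, Rinv_0_lt_compat; lra));
        pose proof (pow_le t (d * d) ltac:(lra)); nra.
    - pose proof (pow_le b d ltac:(lra)); pose proof (pow_le t (d * d) ltac:(lra)); nra. }
  destruct (le_lt_dec a l) as [Hal|Hla].
  - replace (b ^ l * t ^ (l * l) * t ^ (a * a))
      with (b ^ a * t ^ (2 * a * l) * (b ^ (l - a) * t ^ ((l - a) * (l - a)))).
    + apply (Rle_trans _ (b ^ a * t ^ (2 * a * l) * (M1 + M2))); [|right; ring].
      apply Rmult_le_compat_l; [lra|apply HM].
    + assert (Et : t ^ (l * l) * t ^ (a * a) = t ^ (2 * a * l) * t ^ ((l - a) * (l - a)))
        by (rewrite <- !pow_add; f_equal; nia).
      assert (Eb : b ^ l = b ^ a * b ^ (l - a)) by (rewrite <- pow_add; f_equal; lia).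
      rewrite (Rmult_assoc (b ^ l)), Et, Eb; ring.
  - replace (b ^ l * t ^ (l * l) * t ^ (a * a))
      with (b ^ a * t ^ (2 * a * l) * ((/ b) ^ (a - l) * t ^ ((a - l) * (a - l)))).
    + apply (Rle_trans _ (b ^ a * t ^ (2 * a * l) * (M1 + M2))); [|right; ring].
      apply Rmult_le_compat_l; [lra|apply HM].
    + assert (Et : t ^ (l * l) * t ^ (a * a) = t ^ (2 * a * l) * t ^ ((a - l) * (a - l)))
        by (rewrite <- !pow_add; f_equal; nia).
      assert (Eb : b ^ l = b ^ a * (/ b) ^ (a - l)).
      { replace a with (l + (a - l))%nat at 1 by lia.
        rewrite pow_add, pow_inv; field; apply pow_nonzero; lra. }
      rewrite (Rmult_assoc (b ^ l)), Et, Eb; ring.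
Qed.

Lemma gaussian_square_div_bound (t b : R) : 0 < t < 1 -> 0 < b ->
  exists M, 0 < M /\ forall p i : nat, t ^ (p * p + i * i) / t ^ (2 * i * p) <= M * b ^ p * (/ b) ^ i.
Proof.
  intros Ht Hb; destruct (gaussian_square_bound t b Ht Hb) as [M [HM Hgauss]].
  exists M; split; [exact HM|]; intros p i.
  specialize (Hgauss i p); replace (2 * p * i)%nat with (2 * i * p)%nat in Hgauss by lia.
  assert (0 < t ^ (2 * i * p)) by (apply pow_lt; lra); assert (0 < b ^ i) by (apply pow_lt; lra).
  apply (Rmult_le_reg_r (t ^ (2 * i * p) * b ^ i)); [nra|].
  replace (t ^ (p * p + i * i) / t ^ (2 * i * p) * (t ^ (2 * i * p) * b ^ i))
    with (b ^ i * t ^ (i * i) * t ^ (p * p)) by (rewrite pow_add; field; lra).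
  replace (M * b ^ p * (/ b) ^ i * (t ^ (2 * i * p) * b ^ i)) with (M * b ^ p * t ^ (2 * i * p))
    by (rewrite pow_inv; field; lra).
  exact Hgauss.
Qed.

Lemma ex_series_gaussian (t b : R) : 0 < t < 1 -> 0 < b ->
  ex_series (fun d => b ^ d * t ^ (d * d)).
Proof.
  intros Ht Hb; destruct (gaussian_bounded t (2 * b) Ht ltac:(lra)) as [M [HM H]].
  apply (ex_series_le (fun d => b ^ d * t ^ (d * d)) (fun d => M * (/ 2) ^ d)).
  - intros d; specialize (H d); rewrite Rpow_mult_distr in H.
    rewrite Rabs_pos_eq by (apply Rmult_le_pos; apply pow_le; lra).
    pose proof (pow_lt 2 d ltac:(lra)).
    rewrite pow_inv; apply (Rmult_le_reg_l (2 ^ d)); auto.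
    replace (2 ^ d * (M * / 2 ^ d)) with M by (field; lra); nra.
  - apply (ex_series_scal_l (V := R_NormedModule)), ex_series_geom; rewrite Rabs_pos_eq; lra.
Qed.

Lemma exp_le_exp x y : x <= y -> exp x <= exp y.
Proof. intros [Hlt|Heq]; [left; apply exp_increasing; exact Hlt|rewrite Heq; lra]. Qed.

(* On the real axis, [(-x^2; q^2)_n] and [e_{q^2}(-x^2) = 1 / (-x^2; q^2)_oo]. *)
Fixpoint qpoch_sq (q x : R) (n : nat) : R :=
  match n with O => 1 | S m => qpoch_sq q x m * (1 + x * x * (q ^ 2) ^ m) end.

Definition qpoch_sq_inf (q x : R) : R := real (Lim_seq (qpoch_sq q x)).

Definition weight (q x : R) : R := / qpoch_sq_inf q x.

Section Weight.

Variable q : R.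
Hypothesis q_range : 0 < q < 1.

Lemma qpoch_sq_factor_ge1 x m : 1 <= 1 + x * x * (q ^ 2) ^ m.
Proof.
  assert (HQ : 0 <= (q ^ 2) ^ m) by (apply pow_le; simpl; nra).
  pose proof (Rle_0_sqr x) as Hx; unfold Rsqr in Hx.
  pose proof (Rmult_le_pos _ _ Hx HQ); lra.
Qed.

Lemma qpoch_sq_ge1 x n : 1 <= qpoch_sq q x n.
Proof.
  induction n as [|n IH]; cbn [qpoch_sq]; [lra|].
  pose proof (qpoch_sq_factor_ge1 x n); nra.
Qed.

Lemma qpoch_sq_le_S x n : qpoch_sq q x n <= qpoch_sq q x (S n).
Proof.
  cbn [qpoch_sq]; pose proof (qpoch_sq_ge1 x n); pose proof (qpoch_sq_factor_ge1 x n); nra.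
Qed.

Lemma qpoch_sq_le_exp x n : qpoch_sq q x n <= exp (x * x / (1 - q ^ 2)).
Proof.
  set (Q := q ^ 2); assert (HQ : 0 < Q < 1) by (unfold Q; simpl; nra).
  assert (H : qpoch_sq q x n <= exp (x * x * (1 - Q ^ n) / (1 - Q))).
  { induction n as [|n IH].
    - simpl; replace (x * x * (1 - 1) / (1 - Q)) with 0 by (field; lra); rewrite exp_0; lra.
    - cbn [qpoch_sq]; fold Q.
      apply (Rle_trans _ (exp (x * x * (1 - Q ^ n) / (1 - Q)) * exp (x * x * Q ^ n))).
      + apply Rmult_le_compat; [pose proof (qpoch_sq_ge1 x n); lra|
          pose proof (qpoch_sq_factor_ge1 x n) as Hf; fold Q in Hf; lra|exact IH|apply exp_ineq1_le].
      + rewrite <- exp_plus; right; f_equal; change (Q ^ S n) with (Q * Q ^ n); field; lra. }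
  apply (Rle_trans _ _ _ H), exp_le_exp.
  unfold Rdiv; apply Rmult_le_compat_r; [apply Rlt_le, Rinv_0_lt_compat; lra|].
  pose proof (pow_le Q n ltac:(lra)); pose proof (Rle_0_sqr x); unfold Rsqr in *; nra.
Qed.

Lemma is_lim_seq_qpoch_sq x : is_lim_seq (qpoch_sq q x) (qpoch_sq_inf q x).
Proof.
  destruct (ex_finite_lim_seq_incr (qpoch_sq q x) (exp (x * x / (1 - q ^ 2)))) as [l Hl].
  - apply qpoch_sq_le_S.
  - apply qpoch_sq_le_exp.
  - unfold qpoch_sq_inf; rewrite (is_lim_seq_unique _ _ Hl); exact Hl.
Qed.

Lemma qpoch_sq_inf_ge1 x : 1 <= qpoch_sq_inf q x.
Proof.
  apply (Rle_trans _ (qpoch_sq q x 0)); [simpl; lra|].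
  exact (is_lim_seq_incr_compare _ _ (is_lim_seq_qpoch_sq x) (qpoch_sq_le_S x) 0).
Qed.

Lemma qpoch_sq_shift x n : qpoch_sq q x (S n) = (1 + x * x) * qpoch_sq q (q * x) n.
Proof.
  induction n as [|n IH]; [simpl; ring|].
  change (qpoch_sq q x (S (S n))) with (qpoch_sq q x (S n) * (1 + x * x * (q ^ 2) ^ S n)).
  rewrite IH; simpl; ring.
Qed.

Lemma qpoch_sq_inf_shift x : qpoch_sq_inf q x = (1 + x * x) * qpoch_sq_inf q (q * x).
Proof.
  assert (H : is_lim_seq (qpoch_sq q x) ((1 + x * x) * qpoch_sq_inf q (q * x))).
  { apply is_lim_seq_incr_1, (is_lim_seq_ext (fun n => (1 + x * x) * qpoch_sq q (q * x) n)).
    - intros n; symmetry; apply qpoch_sq_shift.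
    - apply (is_lim_seq_scal_l _ _ (qpoch_sq_inf q (q * x))), is_lim_seq_qpoch_sq. }
  unfold qpoch_sq_inf at 1; rewrite (is_lim_seq_unique _ _ H); reflexivity.
Qed.

Lemma qpoch_sq_even x n : qpoch_sq q (- x) n = qpoch_sq q x n.
Proof. induction n as [|n IH]; cbn [qpoch_sq]; [|rewrite IH]; ring. Qed.

Lemma weight_even x : weight q (- x) = weight q x.
Proof.
  unfold weight, qpoch_sq_inf.
  rewrite (Lim_seq_ext _ _ (qpoch_sq_even x)); reflexivity.
Qed.

Lemma weight_pos x : 0 < weight q x.
Proof. apply Rinv_0_lt_compat; pose proof (qpoch_sq_inf_ge1 x); lra. Qed.

Lemma weight_le_1 x : weight q x <= 1.
Proof. unfold weight; rewrite <- Rinv_1; apply Rinv_le_contravar; [lra|apply qpoch_sq_inf_ge1]. Qed.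

Lemma weight_shift x : weight q (q * x) = (1 + x * x) * weight q x.
Proof.
  unfold weight; rewrite (qpoch_sq_inf_shift x).
  pose proof (qpoch_sq_inf_ge1 (q * x)); pose proof (Rle_0_sqr x); unfold Rsqr in *.
  field; split; lra.
Qed.

(* Iterating [weight_shift] gives [w(g / q^a) = w(g) / prod_(j=1..a) (1 + g^2 / q^(2j))]. *)
Lemma weight_div_pow_le g a : 0 < g -> weight q (g / q ^ a) * g ^ (2 * a) <= q ^ (a * (a + 1)).
Proof.
  intros Hg; induction a as [|a IH].
  - simpl; unfold Rdiv; rewrite Rinv_1, !Rmult_1_r; apply weight_le_1.
  - set (x := g / q ^ S a).
    assert (Hqa : 0 < q ^ S a) by (apply pow_lt; lra).
    assert (Hx : g / q ^ a = q * x) by (unfold x; simpl; field; split; [apply pow_nonzero|]; lra).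
    rewrite Hx, weight_shift in IH.
    assert (Hxx : x * x * q ^ (2 * S a) = g * g).
    { unfold x; replace (2 * S a)%nat with (S a + S a)%nat by lia; rewrite pow_add; field; lra. }
    pose proof (weight_pos x); pose proof (pow_le g (2 * a) ltac:(lra)).
    pose proof (Rle_0_sqr x); unfold Rsqr in *.
    replace (2 * S a)%nat with (2 * a + 2)%nat by lia; rewrite pow_add.
    replace (S a * (S a + 1))%nat with (a * (a + 1) + 2 * S a)%nat by lia; rewrite pow_add.
    apply (Rle_trans _ (weight q x * x * x * g ^ (2 * a) * q ^ (2 * S a))).
    + right; replace (g ^ 2) with (g * g) by ring; rewrite <- Hxx; ring.
    + apply Rmult_le_compat_r; [apply pow_le; lra|].
      apply (Rle_trans _ ((1 + x * x) * weight q x * g ^ (2 * a))); [|exact IH].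
      apply Rmult_le_compat_r; nra.
Qed.

End Weight.

Lemma one_sub_ge_exp y : 0 <= y < 1 -> exp (- (y / (1 - y))) <= 1 - y.
Proof.
  intros Hy; pose proof (exp_ineq1_le (y / (1 - y))) as H.
  replace (1 + y / (1 - y)) with (/ (1 - y)) in H by (field; lra).
  rewrite exp_Ropp; replace (1 - y) with (/ / (1 - y)) at 2 by (apply Rinv_inv).
  apply Rinv_le_contravar; [apply Rinv_0_lt_compat; lra|exact H].
Qed.

(* With [Q = q^2]: [qfact q p = (Q; Q)_p] and [qexp_coef q p = (-1)^p Q^(p(p+1)/2) / (Q; Q)_p],
   the Taylor coefficients of the Euler product [qexp q x = (Q x; Q)_oo]. *)
Fixpoint qfact (q : R) (p : nat) : R :=
  match p with O => 1 | S m => qfact q m * (1 - (q ^ 2) ^ S m) end.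

Fixpoint qexp_coef (q : R) (p : nat) : R :=
  match p with O => 1 | S m => - (q ^ 2) ^ S m / (1 - (q ^ 2) ^ S m) * qexp_coef q m end.

Definition qexp (q x : R) : R := Series (fun p => qexp_coef q p * x ^ p).

Section QExp.

Variable q : R.
Hypothesis q_range : 0 < q < 1.

Let Q := q ^ 2.

Lemma Q_range : 0 < Q < 1.
Proof. unfold Q; simpl; nra. Qed.

Lemma Q_pow_range n : 0 < Q ^ n <= 1.
Proof. pose proof Q_range; split; [apply pow_lt|apply pow_le_1]; lra. Qed.

Lemma Q_pow_S_lt_1 n : Q ^ S n < 1.
Proof. pose proof Q_range; apply pow_lt_1_compat; [lra|lia]. Qed.

Lemma Rabs_qexp_coef p : Rabs (qexp_coef q p) * qfact q p = q ^ (p * (p + 1)).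
Proof.
  induction p as [|p IH]; cbn [qexp_coef qfact]; [simpl; rewrite Rabs_R1; ring|]; fold Q.
  pose proof (Q_pow_range (S p)); pose proof (Q_pow_S_lt_1 p).
  unfold Rdiv; rewrite !Rabs_mult, Rabs_Ropp, Rabs_pos_eq, Rabs_pos_eq by (try apply Rlt_le, Rinv_0_lt_compat; lra).
  replace (S p * (S p + 1))%nat with (p * (p + 1) + 2 * S p)%nat by lia.
  rewrite pow_add, <- IH, pow_mult; fold Q; field; lra.
Qed.

Lemma qfact_lower_bound : exists k, 0 < k /\ forall p, k <= qfact q p.
Proof.
  pose proof Q_range as HQ.
  exists (exp (- (Q / ((1 - Q) * (1 - Q))))); split; [apply exp_pos|].
  assert (H : forall p, exp (- ((Q - Q ^ S p) / ((1 - Q) * (1 - Q)))) <= qfact q p).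
  { induction p as [|p IH].
    - simpl; replace ((Q - Q * 1) / ((1 - Q) * (1 - Q))) with 0 by (field; lra).
      rewrite Ropp_0, exp_0; lra.
    - cbn [qfact]; fold Q.
      pose proof (Q_pow_range (S p)); pose proof (Q_pow_S_lt_1 p).
      assert (HQp : Q ^ S p <= Q) by (rewrite <- (pow_1 Q) at 2; apply pow_le_pow_anti; [lra|lia]).
      apply (Rle_trans _ (exp (- ((Q - Q ^ S p) / ((1 - Q) * (1 - Q)))) * exp (- (Q ^ S p / (1 - Q))))).
      + rewrite <- exp_plus; right; f_equal; change (Q ^ S (S p)) with (Q * Q ^ S p); field; lra.
      + apply Rmult_le_compat; try (left; apply exp_pos); [exact IH|].
        eapply Rle_trans; [|apply one_sub_ge_exp; lra].
        apply exp_le_exp, Ropp_le_contravar, Rmult_le_compat_l; [lra|].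
        apply Rinv_le_contravar; lra. }
  intros p; eapply Rle_trans; [|apply H].
  pose proof (Q_pow_range (S p)); apply exp_le_exp, Ropp_le_contravar.
  unfold Rdiv; apply Rmult_le_compat_r; [left; apply Rinv_0_lt_compat; nra|lra].
Qed.

Lemma qexp_coef_bound : exists k, 0 < k /\ forall p, Rabs (qexp_coef q p) <= q ^ (p * (p + 1)) / k.
Proof.
  destruct qfact_lower_bound as [k [Hk H]]; exists k; split; [exact Hk|]; intros p.
  apply (Rmult_le_reg_r k); [exact Hk|].
  unfold Rdiv; rewrite Rmult_assoc, Rinv_l, Rmult_1_r, <- Rabs_qexp_coef by lra.
  apply Rmult_le_compat_l; [apply Rabs_pos|apply H].
Qed.

Lemma ex_series_qexp_abs x : ex_series (fun p => Rabs (qexp_coef q p * x ^ p)).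
Proof.
  destruct qexp_coef_bound as [k [Hk Hb]].
  apply (ex_series_le (fun p => Rabs (qexp_coef q p * x ^ p))
           (fun p => / k * ((Rabs x + 1) ^ p * q ^ (p * p)))).
  - intros p; rewrite Rabs_Rabsolu, Rabs_mult, <- RPow_abs.
    assert (H1 : Rabs x ^ p <= (Rabs x + 1) ^ p) by (apply pow_incr; split; [apply Rabs_pos|lra]).
    assert (H2 : q ^ (p * (p + 1)) <= q ^ (p * p)) by (apply pow_le_pow_anti; [lra|nia]).
    specialize (Hb p); pose proof (pow_le _ p (Rabs_pos x)); pose proof (Rabs_pos (qexp_coef q p)).
    pose proof (Rinv_0_lt_compat k Hk); pose proof (pow_le q (p * (p + 1)) ltac:(lra)).
    unfold Rdiv in Hb; apply (Rle_trans _ (q ^ (p * (p + 1)) * / k * Rabs x ^ p)); [nra|].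
    apply (Rle_trans _ (q ^ (p * p) * / k * (Rabs x + 1) ^ p)); [|right; ring].
    apply Rmult_le_compat; nra.
  - apply (ex_series_scal_l (V := R_NormedModule)), ex_series_gaussian; [lra|].
    pose proof (Rabs_pos x); lra.
Qed.

Lemma ex_series_qexp x : ex_series (fun p => qexp_coef q p * x ^ p).
Proof. apply ex_series_Rabs, ex_series_qexp_abs. Qed.

Lemma qexp_func x : qexp q x = (1 - Q * x) * qexp q (Q * x).
Proof.
  unfold qexp; rewrite Series_incr_1 by apply ex_series_qexp.
  rewrite (Series_incr_1 (fun p => qexp_coef q p * (Q * x) ^ p)) by apply ex_series_qexp.
  assert (E : forall p, qexp_coef q (S p) * x ^ S p =
     qexp_coef q (S p) * (Q * x) ^ S p + (- (Q * x)) * (qexp_coef q p * (Q * x) ^ p)).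
  { intros p; cbn [qexp_coef]; fold Q; pose proof (Q_pow_S_lt_1 p).
    change (Q * Q ^ p) with (Q ^ S p) in *.
    rewrite !Rpow_mult_distr, <- !tech_pow_Rmult; field; change (Q * Q ^ p) with (Q ^ S p); lra. }
  assert (Hex : ex_series (fun p => qexp_coef q (S p) * (Q * x) ^ S p))
    by exact (proj1 (ex_series_incr_1 _) (ex_series_qexp (Q * x))).
  rewrite (Series_ext _ _ E), Series_plus, Series_scal_l;
    [|exact Hex|apply (ex_series_scal_l (V := R_NormedModule)), ex_series_qexp].
  rewrite (Series_incr_1 (fun p => qexp_coef q p * (Q * x) ^ p)) by apply ex_series_qexp.
  simpl; ring.
Qed.

Lemma qexp_inv_Q_pow r : qexp q (/ Q ^ S r) = 0.
Proof.
  pose proof Q_range; induction r as [|r IH].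
  - rewrite qexp_func, pow_1, Rinv_r by lra; ring.
  - rewrite qexp_func.
    replace (Q * / Q ^ S (S r)) with (/ Q ^ S r) by (simpl; field; split; [apply pow_nonzero|]; lra).
    rewrite IH; ring.
Qed.

Lemma qexp_near_0 : exists B, forall y, Rabs y <= 1 -> Rabs (qexp q y - 1) <= B * Rabs y.
Proof.
  set (b := fun p => Rabs (qexp_coef q (S p))).
  assert (Hb : ex_series b).
  { apply (proj1 (ex_series_incr_1 (fun p => Rabs (qexp_coef q p)))).
    apply (ex_series_ext (fun p => Rabs (qexp_coef q p * 1 ^ p))); [intros; rewrite pow1, Rmult_1_r; auto|].
    apply ex_series_qexp_abs. }
  exists (Series b); intros y Hy.
  assert (Hterm : forall p, Rabs (qexp_coef q (S p) * y ^ p) <= b p).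
  { intros p; rewrite Rabs_mult, <- RPow_abs; unfold b.
    rewrite <- (Rmult_1_r (Rabs (qexp_coef q (S p)))) at 2.
    apply Rmult_le_compat_l; [apply Rabs_pos|apply pow_le_1; split; [apply Rabs_pos|auto]]. }
  assert (E : qexp q y - 1 = y * Series (fun p => qexp_coef q (S p) * y ^ p)).
  { unfold qexp; rewrite Series_incr_1 by apply ex_series_qexp.
    rewrite <- Series_scal_l; change (qexp_coef q 0 * y ^ 0) with (1 * 1).
    rewrite (Series_ext (fun k => qexp_coef q (S k) * y ^ S k)
               (fun k => y * (qexp_coef q (S k) * y ^ k))) by (intros; rewrite <- tech_pow_Rmult; ring).
    ring. }
  rewrite E, Rabs_mult, Rmult_comm; apply Rmult_le_compat_r; [apply Rabs_pos|].
  eapply Rle_trans; [apply Series_Rabs|apply Series_le; auto].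
  - apply (ex_series_le (fun p => Rabs (qexp_coef q (S p) * y ^ p)) b); auto; intros; rewrite Rabs_Rabsolu; auto.
  - intros; split; [apply Rabs_pos|auto].
Qed.

Lemma qexp_Q_pow_pos k : 0 < qexp q (Q ^ k).
Proof.
  pose proof Q_range as HQ; destruct qexp_near_0 as [B HB].
  destruct (pow_lt_1_zero Q ltac:(rewrite Rabs_pos_eq; lra) (/ (2 * Rabs B + 2)))
    as [N HN]; [apply Rinv_0_lt_compat; pose proof (Rabs_pos B); lra|].
  assert (Hsmall : forall j, (N <= j)%nat -> 0 < qexp q (Q ^ j)).
  { intros j Hj; specialize (HN j Hj); rewrite Rabs_pos_eq in HN by (apply pow_le; lra).
    pose proof (Rabs_pos B); pose proof (Q_pow_range j); pose proof (Rle_abs B).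
    assert (HBQ : Rabs B * Q ^ j < 1).
    { apply (Rle_lt_trans _ (Rabs B * / (2 * Rabs B + 2))); [apply Rmult_le_compat_l; lra|].
      apply (Rmult_lt_reg_r (2 * Rabs B + 2)); [lra|].
      rewrite Rmult_assoc, Rinv_l by lra; lra. }
    specialize (HB (Q ^ j) ltac:(rewrite Rabs_pos_eq; lra)).
    rewrite (Rabs_pos_eq (Q ^ j)) in HB by lra; apply Rabs_le_between in HB; nra. }
  assert (Hback : forall m k, 0 < qexp q (Q ^ (k + m)) -> 0 < qexp q (Q ^ k)).
  { induction m as [|m IH]; intros k' Hk'; [rewrite Nat.add_0_r in Hk'; exact Hk'|].
    rewrite qexp_func; apply Rmult_lt_0_compat.
    - pose proof (Q_pow_S_lt_1 k') as H; change (Q ^ S k') with (Q * Q ^ k') in H; lra.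
    - change (Q * Q ^ k') with (Q ^ S k'); apply IH; rewrite Nat.add_succ_comm; exact Hk'. }
  apply (Hback N); apply Hsmall; lia.
Qed.

End QExp.

Definition resolvent (q z : R) (p0 : nat) : R :=
  Series (fun p => qexp_coef q p / (1 - z * (q ^ 2) ^ (p + p0))).

Section Resolvent.

Variable q : R.
Hypothesis q_range : 0 < q < 1.

Let Q := q ^ 2.

Variables (z : R) (p0 : nat).
Hypothesis z_range : 0 < z < 1.

Lemma resolvent_denom_pos p : 0 < 1 - z * Q ^ (p + p0).
Proof. pose proof (Q_pow_range q q_range (p + p0)) as H; fold Q in H; nra. Qed.

Lemma resolvent_denom_inv_le p : / (1 - z * Q ^ (p + p0)) <= / (1 - z).
Proof.
  pose proof (Q_pow_range q q_range (p + p0)) as H; fold Q in H.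
  apply Rinv_le_contravar; [lra|nra].
Qed.

Lemma ex_series_resolvent : ex_series (fun p => qexp_coef q p / (1 - z * Q ^ (p + p0))).
Proof.
  apply (ex_series_le (fun p => qexp_coef q p / (1 - z * Q ^ (p + p0)))
           (fun p => / (1 - z) * Rabs (qexp_coef q p * 1 ^ p))).
  - intros p; rewrite pow1, Rmult_1_r; unfold Rdiv; rewrite Rabs_mult, Rmult_comm.
    pose proof (resolvent_denom_pos p); pose proof (resolvent_denom_inv_le p) as Hinv.
    rewrite (Rabs_pos_eq (/ _)) by (apply Rlt_le, Rinv_0_lt_compat; lra).
    apply Rmult_le_compat_r; [apply Rabs_pos|exact Hinv].
  - apply (ex_series_scal_l (V := R_NormedModule)), ex_series_qexp_abs; exact q_range.
Qed.

(* Expanding [1 / (1 - z Q^(p+p0))] geometrically and swapping sums gives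
   [resolvent q z p0 = sum_k (z Q^p0)^k qexp q (Q^k)], a series of nonnegative terms. *)
Lemma resolvent_pos : 0 < resolvent q z p0.
Proof.
  pose proof (Q_range q q_range) as HQ; fold Q in HQ.
  set (u := fun p k => qexp_coef q p * (z * Q ^ (p + p0)) ^ k).
  set (v := fun (p k : nat) => Rabs (qexp_coef q p) * z ^ k).
  assert (Hratio : forall p, 0 <= z * Q ^ (p + p0) < 1)
    by (intros p; pose proof (resolvent_denom_pos p) as Hd; pose proof (Q_pow_range q q_range (p + p0)) as H;
        fold Q in H; split; [nra|lra]).
  assert (Huv : forall p k, Rabs (u p k) <= v p k).
  { intros p k; unfold u, v; rewrite Rabs_mult; apply Rmult_le_compat_l; [apply Rabs_pos|].
    pose proof (Hratio p) as Hr; pose proof (Q_pow_range q q_range (p + p0)) as H; fold Q in H.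
    rewrite Rabs_pos_eq by (apply pow_le; lra); apply pow_incr; nra. }
  assert (Hv : forall p, is_series (v p) (Rabs (qexp_coef q p) * / (1 - z))).
  { intros p; apply (is_series_scal_l (Rabs (qexp_coef q p)) (fun k => z ^ k)).
    apply is_series_geom; rewrite Rabs_pos_eq; lra. }
  assert (Hvsum : ex_series (fun p => Series (v p))).
  { apply (ex_series_ext (fun p => / (1 - z) * Rabs (qexp_coef q p * 1 ^ p))).
    - intros p; rewrite (is_series_unique _ _ (Hv p)), pow1, Rmult_1_r; apply Rmult_comm.
    - apply (ex_series_scal_l (V := R_NormedModule)), ex_series_qexp_abs; exact q_range. }
  destruct (Series_Series_swap u v Huv (fun p => ex_intro _ _ (Hv p)) Hvsum) as [_ [Hex Hswap]].
  assert (Hrow : forall p, Series (u p) = qexp_coef q p / (1 - z * Q ^ (p + p0))).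
  { intros p; apply is_series_unique.
    apply (is_series_scal_l (qexp_coef q p) (fun k => (z * Q ^ (p + p0)) ^ k)).
    apply is_series_geom; rewrite Rabs_pos_eq; apply Hratio. }
  assert (Hcol : forall k, Series (fun p => u p k) = (z * Q ^ p0) ^ k * qexp q (Q ^ k)).
  { intros k; unfold qexp; rewrite <- Series_scal_l; apply Series_ext; intros p; unfold u.
    rewrite !Rpow_mult_distr, <- !pow_mult.
    replace ((p + p0) * k)%nat with (p0 * k + k * p)%nat by nia; rewrite pow_add; ring. }
  unfold resolvent; fold Q; rewrite <- (Series_ext _ _ Hrow), <- Hswap, (Series_ext _ _ Hcol).
  apply (ex_series_ext _ _ Hcol) in Hex.
  assert (Hterm : forall k, 0 <= (z * Q ^ p0) ^ k * qexp q (Q ^ k)).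
  { intros k; pose proof (Q_pow_range q q_range p0) as H; fold Q in H.
    apply Rmult_le_pos; [apply pow_le; nra|left; apply qexp_Q_pow_pos; exact q_range]. }
  eapply Rlt_le_trans; [|apply (term_le_Series _ Hterm 0 Hex)].
  rewrite pow_O, Rmult_1_l; exact (qexp_Q_pow_pos q q_range 0).
Qed.

End Resolvent.

Fixpoint nu_poly (q u : R) (i : nat) : R :=
  match i with O => 1 | S m => nu_poly q u m * (u / q ^ (2 * m + 1) - 1) end.

Lemma nu_poly_S q u i : nu_poly q u (S i) = nu_poly q u i * (u / q ^ (2 * i + 1) - 1).
Proof. reflexivity. Qed.

Inductive poly_fun : (R -> R) -> Prop :=
| poly_fun_const c : poly_fun (fun _ => c)
| poly_fun_mul_id g : poly_fun g -> poly_fun (fun u => u * g u)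
| poly_fun_add g h : poly_fun g -> poly_fun h -> poly_fun (fun u => g u + h u)
| poly_fun_scal c g : poly_fun g -> poly_fun (fun u => c * g u)
| poly_fun_ext g h : poly_fun g -> (forall u, g u = h u) -> poly_fun h.

Lemma poly_fun_mul_affine g a b : poly_fun g -> poly_fun (fun u => g u * (a * u + b)).
Proof.
  intros Hg; apply (poly_fun_ext (fun u => a * (u * g u) + b * g u)); [|intros; ring].
  apply poly_fun_add; apply poly_fun_scal; [apply poly_fun_mul_id|]; exact Hg.
Qed.

Lemma nu_poly_sub q z i :
  exists g, poly_fun g /\ forall u, nu_poly q u i = nu_poly q z i + (u - z) * g u.
Proof.
  induction i as [|i [g [Hg E]]].
  - exists (fun _ => 0); split; [apply poly_fun_const|intros; simpl; ring].
  - set (a := / q ^ (2 * i + 1)).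
    exists (fun u => nu_poly q z i * a + g u * (a * u + -1)); split.
    + apply poly_fun_add; [apply poly_fun_const|apply poly_fun_mul_affine; exact Hg].
    + intros u; rewrite !nu_poly_S, E; unfold a, Rdiv; ring.
Qed.

Lemma nu_poly_bound q X i : 0 < q < 1 -> 1 <= X -> Rabs (nu_poly q X i) <= X ^ i / q ^ (i * i).
Proof.
  intros Hq HX; induction i as [|i IH]; [simpl; rewrite Rabs_R1; lra|].
  rewrite nu_poly_S, Rabs_mult.
  assert (Hqi : 0 < q ^ (2 * i + 1) <= 1) by (split; [apply pow_lt|apply pow_le_1]; lra).
  assert (H1 : 1 <= X / q ^ (2 * i + 1)).
  { apply (Rmult_le_reg_r (q ^ (2 * i + 1))); [lra|].
    unfold Rdiv; rewrite Rmult_assoc, Rinv_l, Rmult_1_l, Rmult_1_r by lra; lra. }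
  rewrite (Rabs_pos_eq (X / q ^ (2 * i + 1) - 1)) by lra.
  apply (Rle_trans _ (X ^ i / q ^ (i * i) * (X / q ^ (2 * i + 1)))).
  - apply Rmult_le_compat; [apply Rabs_pos|lra|exact IH|lra].
  - right; replace (S i * S i)%nat with (i * i + (2 * i + 1))%nat by lia.
    rewrite (pow_add q (i * i)); rewrite <- tech_pow_Rmult; field; split; apply pow_nonzero; lra.
Qed.

Lemma nu_poly_root_eq0 q n j : 0 < q -> nu_poly q (q ^ (2 * n + 1)) (S (n + j)) = 0.
Proof.
  intros Hq; induction j as [|j IH]; rewrite nu_poly_S.
  - rewrite Nat.add_0_r; unfold Rdiv; rewrite Rinv_r by (apply pow_nonzero; lra); ring.
  - rewrite (Nat.add_succ_r n j), IH; ring.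
Qed.

Lemma nu_poly_root_neq0 q n i : 0 < q < 1 -> (i <= n)%nat -> nu_poly q (q ^ (2 * n + 1)) i <> 0.
Proof.
  intros Hq; induction i as [|i IH]; intros Hi; [simpl; lra|rewrite nu_poly_S].
  apply Rmult_integral_contrapositive; split; [apply IH; lia|].
  assert (Hlt : q ^ (2 * n + 1) < q ^ (2 * i + 1)) by (apply pow_lt_pow_anti; [exact Hq|lia]).
  assert (Hpos : 0 < q ^ (2 * i + 1)) by (apply pow_lt; lra).
  enough (q ^ (2 * n + 1) / q ^ (2 * i + 1) < 1) by lra.
  apply (Rmult_lt_reg_r (q ^ (2 * i + 1))); [exact Hpos|].
  unfold Rdiv; rewrite Rmult_assoc, Rinv_l; lra.
Qed.

Definition qgrid (q : R) (p0 p : nat) : R := / (q ^ 2) ^ (p + p0).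

Section GridSums.

Variable q : R.
Hypothesis q_range : 0 < q < 1.

Let Q := q ^ 2.

Variable p0 : nat.

Lemma qgrid_pow r p : qgrid q p0 p ^ r = (/ Q ^ p0) ^ r * (/ Q ^ r) ^ p.
Proof.
  pose proof (Q_range q q_range); unfold qgrid; fold Q.
  rewrite !pow_inv, <- Rinv_mult, <- !pow_mult, <- pow_add; do 2 f_equal; nia.
Qed.

(* The Euler product [(Q x; Q)_oo] kills every polynomial multiple of [x] on the grid [Q^-(p+p0)]. *)
Lemma is_series_qexp_grid_poly g : poly_fun g -> forall r,
  is_series (fun p => qexp_coef q p * qgrid q p0 p ^ S r * g (qgrid q p0 p)) 0.
Proof.
  induction 1 as [c|g _ IH|g h _ IHg _ IHh|c g _ IH|g h _ IH E]; intros r.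
  - assert (E : forall p, c * (/ Q ^ p0) ^ S r * (qexp_coef q p * (/ Q ^ S r) ^ p) =
                          qexp_coef q p * qgrid q p0 p ^ S r * c)
      by (intros p; rewrite qgrid_pow; ring).
    apply (is_series_ext _ _ _ E).
    replace 0 with (c * (/ Q ^ p0) ^ S r * qexp q (/ Q ^ S r))
      by (unfold Q; rewrite qexp_inv_Q_pow by exact q_range; ring).
    apply (is_series_scal_l (V := R_NormedModule)), Series_correct, ex_series_qexp; exact q_range.
  - assert (E : forall p, qexp_coef q p * qgrid q p0 p ^ S (S r) * g (qgrid q p0 p) =
                          qexp_coef q p * qgrid q p0 p ^ S r * (qgrid q p0 p * g (qgrid q p0 p)))
      by (intros; simpl; ring).
    exact (is_series_ext _ _ _ E (IH (S r))).
  - assert (E : forall p, qexp_coef q p * qgrid q p0 p ^ S r * g (qgrid q p0 p) +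
                          qexp_coef q p * qgrid q p0 p ^ S r * h (qgrid q p0 p) =
                          qexp_coef q p * qgrid q p0 p ^ S r * (g (qgrid q p0 p) + h (qgrid q p0 p)))
      by (intros; ring).
    replace 0 with (0 + 0) by ring.
    exact (is_series_ext _ _ _ E (is_series_plus (V := R_NormedModule) _ _ _ _ (IHg r) (IHh r))).
  - assert (E : forall p, c * (qexp_coef q p * qgrid q p0 p ^ S r * g (qgrid q p0 p)) =
                          qexp_coef q p * qgrid q p0 p ^ S r * (c * g (qgrid q p0 p)))
      by (intros; ring).
    replace 0 with (c * 0) by ring.
    exact (is_series_ext _ _ _ E (is_series_scal_l (V := R_NormedModule) _ _ _ (IH r))).
  - assert (E' : forall p, qexp_coef q p * qgrid q p0 p ^ S r * g (qgrid q p0 p) =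
                           qexp_coef q p * qgrid q p0 p ^ S r * h (qgrid q p0 p))
      by (intros; rewrite E; reflexivity).
    exact (is_series_ext _ _ _ E' (IH r)).
Qed.

(* Partial fractions: [nu(X) / (1 - z / X) = nu(z) / (1 - z / X) + X g(X)] with [X = qgrid q p0 p]. *)
Lemma is_series_resolvent_nu_poly z i : 0 < z < 1 ->
  is_series (fun p => qexp_coef q p / (1 - z * Q ^ (p + p0)) * nu_poly q (qgrid q p0 p) i)
            (nu_poly q z i * resolvent q z p0).
Proof.
  intros Hz; destruct (nu_poly_sub q z i) as [g [Hg Eg]].
  assert (E : forall p, nu_poly q z i * (qexp_coef q p / (1 - z * Q ^ (p + p0))) +
                        qexp_coef q p * qgrid q p0 p ^ 1 * g (qgrid q p0 p) =
                        qexp_coef q p / (1 - z * Q ^ (p + p0)) * nu_poly q (qgrid q p0 p) i).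
  { intros p; rewrite (Eg (qgrid q p0 p)); unfold qgrid; fold Q.
    pose proof (resolvent_denom_pos q q_range z p0 Hz p) as Hd; fold Q in Hd.
    pose proof (Q_pow_range q q_range (p + p0)) as HQp; fold Q in HQp.
    revert Hd HQp; generalize (Q ^ (p + p0)); intros X Hd HX; field; split; lra. }
  apply (is_series_ext _ _ _ E).
  rewrite <- (Rplus_0_r (nu_poly q z i * resolvent q z p0)).
  apply (is_series_plus (V := R_NormedModule)); [|apply is_series_qexp_grid_poly; exact Hg].
  apply (is_series_scal_l (V := R_NormedModule)), Series_correct.
  apply ex_series_resolvent; assumption.
Qed.

End GridSums.

Lemma pow_div_pow_eq (x : R) e1 e2 e3 e4 : x <> 0 -> (e1 + e4 = e2 + e3)%nat ->
  x ^ e1 / x ^ e2 = x ^ e3 / x ^ e4.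
Proof.
  intros Hx He; assert (E : x ^ e1 * x ^ e4 = x ^ e3 * x ^ e2) by (rewrite <- !pow_add; f_equal; lia).
  pose proof (pow_nonzero x e2 Hx); pose proof (pow_nonzero x e4 Hx).
  field_simplify_eq; auto; lra.
Qed.

Section NuPolyUniqueness.

Variable q : R.
Hypothesis q_range : 0 < q < 1.

Let Q := q ^ 2.

Variables (p0 : nat) (c : nat -> R) (K : R).
Hypothesis c_bound : forall i, Rabs (c i) <= K * q ^ (2 * (i * i)) * q ^ (2 * (p0 * i)).
Hypothesis c_nu_sums : forall p, Series (fun i => c i * nu_poly q (qgrid q p0 p) i) = 0.

Lemma coeff_bound_const_ge0 : 0 <= K.
Proof.
  pose proof (c_bound 0) as H; rewrite !Nat.mul_0_r in H; simpl in H.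
  pose proof (Rabs_pos (c 0)); lra.
Qed.

Lemma resolvent_nu_poly_dominated z : 0 < z < 1 ->
  exists C b, 1 < b /\ b * q < 1 /\ forall p i,
    Rabs (qexp_coef q p / (1 - z * Q ^ (p + p0)) * (c i * nu_poly q (qgrid q p0 p) i))
      <= C * (b * q) ^ p * (/ b) ^ i.
Proof.
  intros Hz; pose proof coeff_bound_const_ge0 as HK.
  destruct (qexp_coef_bound q q_range) as [k [Hk Hcoef]].
  set (b := 2 / (1 + q)).
  assert (Hb : 1 < b /\ b * q < 1).
  { assert (b * (1 + q) = 2) by (unfold b; field; lra); split; nra. }
  destruct (gaussian_square_div_bound q b q_range ltac:(lra)) as [M [HM Hsq]].
  exists (K * M / (k * (1 - z))), b; split; [apply Hb|split; [apply Hb|]]; intros p i.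
  assert (Hq : forall m, 0 < q ^ m) by (intros; apply pow_lt; lra).
  assert (Hgrid : Rabs (nu_poly q (qgrid q p0 p) i) <= / q ^ (2 * ((p + p0) * i)) / q ^ (i * i)).
  { eapply Rle_trans; [apply nu_poly_bound; [exact q_range|]|].
    - unfold qgrid; rewrite <- Rinv_1; apply Rinv_le_contravar; apply (Q_pow_range q q_range).
    - unfold qgrid; rewrite pow_inv, <- !pow_mult; right; reflexivity. }
  assert (Hdenom : Rabs (/ (1 - z * Q ^ (p + p0))) <= / (1 - z)).
  { rewrite Rabs_pos_eq; [apply (resolvent_denom_inv_le q q_range z p0 Hz)|].
    apply Rlt_le, Rinv_0_lt_compat, (resolvent_denom_pos q q_range z p0 Hz). }
  unfold Rdiv at 1; rewrite !Rabs_mult.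
  apply (Rle_trans _ (q ^ (p * (p + 1)) / k * / (1 - z) *
     (K * q ^ (2 * (i * i)) * q ^ (2 * (p0 * i)) * (/ q ^ (2 * ((p + p0) * i)) / q ^ (i * i))))).
  { apply Rmult_le_compat; try (apply Rmult_le_pos; apply Rabs_pos);
      apply Rmult_le_compat; auto; apply Rabs_pos. }
  assert (Hexp : q ^ (p * (p + 1)) / k * / (1 - z) *
     (K * q ^ (2 * (i * i)) * q ^ (2 * (p0 * i)) * (/ q ^ (2 * ((p + p0) * i)) / q ^ (i * i)))
     = K / (k * (1 - z)) * q ^ p * (q ^ (p * p + i * i) / q ^ (2 * i * p))).
  { replace (q ^ (p * p + i * i) / q ^ (2 * i * p))
      with (q ^ (p * (p + 1) + 2 * (i * i) + 2 * (p0 * i)) / q ^ (p + (2 * ((p + p0) * i) + i * i)))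
      by (apply pow_div_pow_eq; [lra|nia]).
    rewrite !pow_add; field; repeat split; try apply pow_nonzero; lra. }
  rewrite Hexp, Rpow_mult_distr.
  replace (K * M / (k * (1 - z)) * (b ^ p * q ^ p) * (/ b) ^ i)
    with (K / (k * (1 - z)) * q ^ p * (M * b ^ p * (/ b) ^ i)) by (field; lra).
  apply Rmult_le_compat_l; [|apply Hsq].
  apply Rmult_le_pos; [|apply Rlt_le, Hq]; apply Rmult_le_pos; [exact HK|].
  apply Rlt_le, Rinv_0_lt_compat; nra.
Qed.

(* Summing [c i * nu_poly] against the resolvent weights in both orders (Fubini):
   over [i] first gives [0] by hypothesis, over [p] first gives [c i * nu_poly q z i * resolvent]. *)
Lemma Series_nu_poly_eq0 z : 0 < z < 1 -> Series (fun i => c i * nu_poly q z i) = 0.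
Proof.
  intros Hz; destruct (resolvent_nu_poly_dominated z Hz) as [C [b [Hb1 [Hbq Hdom]]]].
  set (u := fun p i => qexp_coef q p / (1 - z * Q ^ (p + p0)) * (c i * nu_poly q (qgrid q p0 p) i)).
  assert (Hib : Rabs (/ b) < 1)
    by (rewrite Rabs_pos_eq by (apply Rlt_le, Rinv_0_lt_compat; lra);
        rewrite <- Rinv_1; apply Rinv_lt_contravar; lra).
  assert (Hrow : forall p, is_series (fun i => C * (b * q) ^ p * (/ b) ^ i) (C * (b * q) ^ p * / (1 - / b)))
    by (intros; apply (is_series_scal_l (V := R_NormedModule)), is_series_geom; exact Hib).
  assert (Hsum : ex_series (fun p => Series (fun i => C * (b * q) ^ p * (/ b) ^ i))).
  { assert (E : forall p, C * / (1 - / b) * (b * q) ^ p = Series (fun i => C * (b * q) ^ p * (/ b) ^ i))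
      by (intros p; rewrite (is_series_unique _ _ (Hrow p)); ring).
    apply (ex_series_ext _ _ E), (ex_series_scal_l (V := R_NormedModule)), ex_series_geom.
    pose proof q_range; rewrite Rabs_pos_eq; nra. }
  destruct (Series_Series_swap u _ Hdom (fun p => ex_intro _ _ (Hrow p)) Hsum) as [Hcol [_ Hswap]].
  assert (Hrows0 : forall p, Series (u p) = 0).
  { intros p; unfold u; rewrite Series_scal_l, c_nu_sums; ring. }
  assert (Hcols : forall i, Series (fun p => u p i) = c i * nu_poly q z i * resolvent q z p0).
  { intros i; rewrite Rmult_assoc.
    rewrite <- (is_series_unique _ _ (is_series_resolvent_nu_poly q q_range p0 z i Hz)), <- Series_scal_l.
    apply Series_ext; intros p; unfold u; fold Q; ring. }
  rewrite (Series_ext _ _ Hrows0), (Series_ext _ _ Hcols), Series_zero in Hswap.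
  rewrite (Series_ext _ (fun i => resolvent q z p0 * (c i * nu_poly q z i))), Series_scal_l in Hswap
    by (intros; ring).
  pose proof (resolvent_pos q q_range z p0 Hz); apply Rmult_integral in Hswap; lra.
Qed.

Lemma nu_poly_coeffs_eq0 n : c n = 0.
Proof.
  induction n as [n IH] using (well_founded_induction lt_wf).
  set (z := q ^ (2 * n + 1)).
  assert (Hz : 0 < z < 1) by (split; [apply pow_lt; lra|apply pow_lt_1_compat; [lra|lia]]).
  assert (Hothers : forall i, i <> n -> c i * nu_poly q z i = 0).
  { intros i Hi; destruct (Nat.lt_gt_cases i n) as [[Hlt|Hgt] _]; [exact Hi| |].
    - rewrite (IH i Hlt); ring.
    - replace i with (S (n + (i - S n))) by lia; unfold z.
      rewrite nu_poly_root_eq0 by lra; ring. }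
  pose proof (Series_nu_poly_eq0 z Hz) as H0.
  rewrite (is_series_unique _ _ (is_series_single _ n Hothers)) in H0.
  apply Rmult_integral in H0; destruct H0 as [H0|H0]; [exact H0|].
  exfalso; exact (nu_poly_root_neq0 q n n q_range (le_n n) H0).
Qed.

End NuPolyUniqueness.

Definition jackson_sum (q g : R) (phi : R -> R) : R :=
  Series (fun n => phi (q ^ n * g)) + Series (fun n => phi (g / q ^ S n)).

Definition moment_integrand (q : R) (m : nat) (x : R) : R := x ^ (m + 1) * weight q x.

Definition moment (q g : R) (m : nat) : R := jackson_sum q g (moment_integrand q m).

Section Moments.

Variables q g : R.
Hypothesis q_range : 0 < q < 1.
Hypothesis g_pos : 0 < g.

Lemma inner_point_pos n : 0 < q ^ n * g.
Proof. apply Rmult_lt_0_compat; [apply pow_lt|]; lra. Qed.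

Lemma outer_point_pos n : 0 < g / q ^ n.
Proof. apply Rdiv_lt_0_compat; [|apply pow_lt]; lra. Qed.

Lemma moment_integrand_pos m x : 0 < x -> 0 < moment_integrand q m x.
Proof. intros Hx; apply Rmult_lt_0_compat; [apply pow_lt; lra|apply weight_pos; exact q_range]. Qed.

Lemma moment_integrand_inner_le m n :
  moment_integrand q m (q ^ n * g) <= g ^ (m + 1) * (q ^ (m + 1)) ^ n.
Proof.
  unfold moment_integrand; rewrite Rpow_mult_distr, <- pow_mult, Nat.mul_comm, pow_mult.
  pose proof (weight_le_1 q q_range (q ^ n * g)); pose proof (weight_pos q q_range (q ^ n * g)).
  assert (0 < (q ^ (m + 1)) ^ n * g ^ (m + 1)) by (apply Rmult_lt_0_compat; repeat apply pow_lt; lra).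
  nra.
Qed.

Lemma moment_integrand_outer_le m a :
  moment_integrand q m (g / q ^ a) <=
  g ^ (m + 1) * q ^ (a * (a + 1)) / (g ^ (2 * a) * q ^ (a * (m + 1))).
Proof.
  pose proof (weight_div_pow_le q q_range g a g_pos).
  assert (Hga : 0 < g ^ (2 * a)) by (apply pow_lt; lra).
  assert (Hqa : 0 < q ^ (a * (m + 1))) by (apply pow_lt; lra).
  assert (Hx : (g / q ^ a) ^ (m + 1) = g ^ (m + 1) / q ^ (a * (m + 1)))
    by (unfold Rdiv; rewrite Rpow_mult_distr, pow_inv, pow_mult; reflexivity).
  assert (Hw : weight q (g / q ^ a) <= q ^ (a * (a + 1)) / g ^ (2 * a)).
  { apply (Rmult_le_reg_r (g ^ (2 * a))); [exact Hga|].
    unfold Rdiv; rewrite Rmult_assoc, Rinv_l, Rmult_1_r by lra; assumption. }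
  unfold moment_integrand; rewrite Hx.
  apply (Rle_trans _ (g ^ (m + 1) / q ^ (a * (m + 1)) * (q ^ (a * (a + 1)) / g ^ (2 * a)))).
  - apply Rmult_le_compat_l; [|exact Hw].
    apply Rlt_le, Rdiv_lt_0_compat; [apply pow_lt; lra|exact Hqa].
  - right; field; lra.
Qed.

Lemma ex_series_moment_inner m : ex_series (fun n => moment_integrand q m (q ^ n * g)).
Proof.
  apply (ex_series_le (fun n => moment_integrand q m (q ^ n * g)) (fun n => g ^ (m + 1) * (q ^ (m + 1)) ^ n)).
  - intros n; rewrite Rabs_pos_eq; [apply moment_integrand_inner_le|].
    apply Rlt_le, moment_integrand_pos, inner_point_pos.
  - apply (ex_series_scal_l (V := R_NormedModule)), ex_series_geom.
    pose proof (pow_lt_1_compat q (m + 1) ltac:(lra) ltac:(lia)); rewrite Rabs_pos_eq; lra.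
Qed.

Lemma ex_series_moment_outer m : ex_series (fun n => moment_integrand q m (g / q ^ S n)).
Proof.
  set (b := q / (g * g * q ^ (m + 1))).
  assert (Hb : 0 < b)
    by (apply Rdiv_lt_0_compat; [lra|apply Rmult_lt_0_compat; [nra|apply pow_lt; lra]]).
  apply (ex_series_le (fun n => moment_integrand q m (g / q ^ S n))
           (fun n => g ^ (m + 1) * (b ^ S n * q ^ (S n * S n)))).
  - intros n; rewrite Rabs_pos_eq by (apply Rlt_le, moment_integrand_pos, outer_point_pos).
    eapply Rle_trans; [apply moment_integrand_outer_le|right].
    set (a := S n); unfold b.
    replace (a * (a + 1))%nat with (a * a + a)%nat by lia.
    replace (2 * a)%nat with (a + a)%nat by lia.
    replace (a * (m + 1))%nat with ((m + 1) * a)%nat by lia.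
    rewrite (pow_mult q (m + 1) a), (pow_add q (a * a) a), (pow_add g a a).
    unfold Rdiv; rewrite Rpow_mult_distr, pow_inv, !Rpow_mult_distr.
    assert (q ^ (m + 1) <> 0) by (apply pow_nonzero; lra).
    field; repeat split; try apply pow_nonzero; lra.
  - apply (ex_series_scal_l (V := R_NormedModule)).
    apply (ex_series_incr_1 (fun n => b ^ n * q ^ (n * n))), ex_series_gaussian; assumption.
Qed.

Lemma jackson_sum_scale phi :
  ex_series (fun n => phi (q ^ n * g)) -> ex_series (fun n => phi (g / q ^ S n)) ->
  jackson_sum q g (fun x => phi (q * x)) = jackson_sum q g phi.
Proof.
  intros Hin Hout; unfold jackson_sum.
  assert (E1 : forall n, phi (q * (q ^ n * g)) = phi (q ^ S n * g)) by (intros; f_equal; simpl; ring).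
  assert (E2 : forall n, phi (q * (g / q ^ S (S n))) = phi (g / q ^ S n)).
  { intros; f_equal; change (q ^ S (S n)) with (q * q ^ S n).
    field; split; [apply pow_nonzero|]; lra. }
  assert (E3 : phi (q * (g / q ^ 1)) = phi (q ^ 0 * g)) by (f_equal; simpl; field; lra).
  assert (Hout' : ex_series (fun n => phi (q * (g / q ^ S n)))).
  { apply (ex_series_incr_1 (fun n => phi (q * (g / q ^ S n)))).
    exact (ex_series_ext _ _ (fun n => eq_sym (E2 n)) Hout). }
  rewrite (Series_ext _ _ E1), (Series_incr_1 (fun n => phi (q * (g / q ^ S n))) Hout').
  rewrite (Series_ext _ _ E2), E3, (Series_incr_1 (fun n => phi (q ^ n * g)) Hin); ring.
Qed.

(* From [w(q x) = (1 + x^2) w(x)]: [q^(m+1) (A_m + A_(m+2)) = A_m]. *)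
Lemma moment_rec m : moment q g (m + 2) = (/ q ^ (m + 1) - 1) * moment q g m.
Proof.
  unfold moment.
  assert (E : forall x, moment_integrand q m (q * x) =
                        q ^ (m + 1) * (moment_integrand q m x + moment_integrand q (m + 2) x)).
  { intros x; unfold moment_integrand; rewrite weight_shift, Rpow_mult_distr by exact q_range.
    replace (m + 2 + 1)%nat with (m + 1 + 2)%nat by lia; rewrite (pow_add x (m + 1) 2); simpl; ring. }
  assert (Hscale : jackson_sum q g (fun x => moment_integrand q m (q * x)) =
     q ^ (m + 1) * (jackson_sum q g (moment_integrand q m) + jackson_sum q g (moment_integrand q (m + 2)))).
  { unfold jackson_sum; rewrite (Series_ext _ _ (fun n => E (q ^ n * g))), (Series_ext _ _ (fun n => E (g / q ^ S n))).
    rewrite !Series_scal_l, !Series_plus; try apply ex_series_moment_inner; try apply ex_series_moment_outer; ring. }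
  rewrite jackson_sum_scale in Hscale by (apply ex_series_moment_inner || apply ex_series_moment_outer).
  assert (Hq : 0 < q ^ (m + 1)) by (apply pow_lt; lra).
  apply (Rmult_eq_reg_l (q ^ (m + 1))); [|lra].
  replace (q ^ (m + 1) * ((/ q ^ (m + 1) - 1) * jackson_sum q g (moment_integrand q m)))
    with (jackson_sum q g (moment_integrand q m) - q ^ (m + 1) * jackson_sum q g (moment_integrand q m))
    by (field; lra).
  lra.
Qed.

Lemma moment_pos m : 0 < moment q g m.
Proof.
  unfold moment, jackson_sum.
  assert (Hge : forall n, 0 <= moment_integrand q m (q ^ n * g))
    by (intros; apply Rlt_le, moment_integrand_pos, inner_point_pos).
  assert (Hin : 0 < Series (fun n => moment_integrand q m (q ^ n * g))).
  { eapply Rlt_le_trans; [|apply (term_le_Series _ Hge 0), ex_series_moment_inner].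
    apply moment_integrand_pos, inner_point_pos. }
  assert (Hout : 0 <= Series (fun n => moment_integrand q m (g / q ^ S n))).
  { apply Series_ge0; [|apply ex_series_moment_outer].
    intros; apply Rlt_le, moment_integrand_pos, outer_point_pos. }
  lra.
Qed.

Lemma moment_even_nu_poly p i : moment q g (2 * (i + p)) = moment q g (2 * p) * nu_poly q (qgrid q 0 p) i.
Proof.
  induction i as [|i IH]; [simpl; ring|].
  rewrite nu_poly_S; replace (2 * (S i + p))%nat with (2 * (i + p) + 2)%nat by lia.
  rewrite moment_rec, IH; unfold qgrid; rewrite Nat.add_0_r.
  replace (2 * (i + p) + 1)%nat with (2 * p + (2 * i + 1))%nat by lia.
  rewrite pow_add, <- pow_mult; unfold Rdiv; rewrite Rinv_mult; ring.
Qed.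

End Moments.

Definition real_powser (al : nat -> R) (x : R) : R := Series (fun l => al l * x ^ l).

Definition jackson_term (q : R) (al : nat -> R) (k : nat) (x : R) : R :=
  x * (real_powser al x * weight q x * x ^ k + real_powser al (- x) * weight q (- x) * (- x) ^ k).

Definition parity_factor (n : nat) : R := 1 + (-1) ^ n.

Definition expansion_term (q : R) (al : nat -> R) (k : nat) (x : R) (l : nat) : R :=
  al l * (parity_factor (l + k) * moment_integrand q (l + k) x).

Lemma parity_factor_bound n : Rabs (parity_factor n) <= 2.
Proof.
  unfold parity_factor; eapply Rle_trans; [apply Rabs_triang|].
  rewrite Rabs_R1, pow_1_abs; lra.
Qed.

Lemma parity_factor_even n : parity_factor (2 * n) = 2.
Proof. unfold parity_factor; rewrite pow_1_even; ring. Qed.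

Lemma parity_factor_odd n : parity_factor (2 * n + 1) = 0.
Proof. unfold parity_factor; rewrite Nat.add_1_r, pow_1_odd; ring. Qed.

Section JacksonExpansion.

Variables r g K : R.
Variable al : nat -> R.
Hypothesis r_range : 0 < r < 1.
Hypothesis g_pos : 0 < g.
Hypothesis al_bound : forall l, Rabs (al l) <= K * r ^ (l * l).

Let q := r * r.

Lemma r_sq_range : 0 < q < 1.
Proof. unfold q; nra. Qed.

Lemma al_bound_const_ge0 : 0 <= K.
Proof. pose proof (al_bound 0) as H; pose proof (Rabs_pos (al 0)); simpl in H; lra. Qed.

Lemma ex_series_real_powser x : ex_series (fun l => al l * x ^ l).
Proof.
  apply ex_series_Rabs.
  apply (ex_series_le (fun l => Rabs (al l * x ^ l)) (fun l => K * ((Rabs x + 1) ^ l * r ^ (l * l)))).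
  - intros l; rewrite Rabs_Rabsolu, Rabs_mult, <- RPow_abs.
    assert (Rabs x ^ l <= (Rabs x + 1) ^ l) by (apply pow_incr; split; [apply Rabs_pos|lra]).
    pose proof (pow_le _ l (Rabs_pos x)); pose proof (pow_le r (l * l) ltac:(lra)).
    pose proof (al_bound l); pose proof (Rabs_pos (al l)).
    apply (Rle_trans _ (K * r ^ (l * l) * Rabs x ^ l)); [apply Rmult_le_compat_r; auto|].
    replace (K * ((Rabs x + 1) ^ l * r ^ (l * l))) with (K * r ^ (l * l) * (Rabs x + 1) ^ l) by ring.
    apply Rmult_le_compat_l; [nra|auto].
  - apply (ex_series_scal_l (V := R_NormedModule)), ex_series_gaussian; [exact r_range|].
    pose proof (Rabs_pos x); lra.
Qed.

Lemma jackson_term_expand k x :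
  jackson_term q al k x = Series (expansion_term q al k x).
Proof.
  unfold jackson_term, real_powser, expansion_term; rewrite weight_even.
  assert (E : forall l, (x * weight q x * x ^ k) * (al l * x ^ l) +
                        (x * weight q x * (-1) ^ k * x ^ k) * (al l * (- x) ^ l) =
                        al l * (parity_factor (l + k) * moment_integrand q (l + k) x)).
  { intros l; unfold parity_factor, moment_integrand.
    replace ((- x) ^ l) with ((-1) ^ l * x ^ l) by (rewrite <- Rpow_mult_distr; f_equal; ring).
    rewrite (pow_add x (l + k) 1), (pow_add x l k), (pow_add (-1) l k); ring. }
  rewrite <- (Series_ext _ _ E), Series_plus, !Series_scal_l;
    [|apply (ex_series_scal_l (V := R_NormedModule)), ex_series_real_powser..].
  replace (- x) with (-1 * x) by ring; rewrite Rpow_mult_distr; ring.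
Qed.

Lemma Rabs_expansion_term_le l k x : 0 < x ->
  Rabs (expansion_term q al k x l) <= 2 * K * r ^ (l * l) * moment_integrand q (l + k) x.
Proof.
  unfold expansion_term; intros Hx; pose proof (moment_integrand_pos q r_sq_range (l + k) x Hx).
  rewrite !Rabs_mult, (Rabs_pos_eq (moment_integrand _ _ _)) by lra.
  pose proof (al_bound l); pose proof (parity_factor_bound (l + k)).
  replace (2 * K * r ^ (l * l) * moment_integrand q (l + k) x)
    with (K * r ^ (l * l) * (2 * moment_integrand q (l + k) x)) by ring.
  apply Rmult_le_compat; [apply Rabs_pos|apply Rmult_le_pos; [apply Rabs_pos|lra]|auto|].
  apply Rmult_le_compat_r; lra.
Qed.

Lemma expansion_inner_dominated k n l :
  Rabs (expansion_term q al k (q ^ n * g) l) <=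
  2 * K * g ^ (k + 1) * q ^ n * (g ^ l * r ^ (l * l)).
Proof.
  pose proof r_sq_range; pose proof al_bound_const_ge0.
  eapply Rle_trans; [apply Rabs_expansion_term_le, inner_point_pos; lra|].
  pose proof (moment_integrand_inner_le q g r_sq_range g_pos (l + k) n) as Hmi.
  assert (Hqn : (q ^ (l + k + 1)) ^ n <= q ^ n).
  { apply pow_incr; split; [apply pow_le; lra|].
    rewrite <- (pow_1 q) at 2; apply pow_le_pow_anti; [lra|lia]. }
  assert (Hc : 0 <= 2 * K * r ^ (l * l)) by (apply Rmult_le_pos; [lra|apply pow_le; lra]).
  assert (Hgl : 0 <= g ^ (l + k + 1)) by (apply pow_le; lra).
  apply (Rle_trans _ (2 * K * r ^ (l * l) * (g ^ (l + k + 1) * q ^ n))).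
  - apply Rmult_le_compat_l; [exact Hc|].
    apply (Rle_trans _ _ _ Hmi), Rmult_le_compat_l; assumption.
  - right; replace (l + k + 1)%nat with (l + (k + 1))%nat by lia; rewrite pow_add; ring.
Qed.

Lemma expansion_outer_dominated M k n l :
  (forall l a : nat, (2 * g) ^ l * r ^ (l * l) * r ^ (a * a) <= M * (2 * g) ^ a * r ^ (2 * a * l)) ->
  Rabs (expansion_term q al k (g / q ^ S n) l) <=
  2 * K * M * g ^ (k + 1) * (/ 2) ^ l * (r ^ (S n * S n) * (2 / (g * r ^ (2 * k))) ^ S n).
Proof.
  intros Hgauss; pose proof r_sq_range; pose proof al_bound_const_ge0.
  set (a := S n).
  eapply Rle_trans; [apply Rabs_expansion_term_le, outer_point_pos; lra|].
  eapply Rle_trans.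
  { apply Rmult_le_compat_l; [apply Rmult_le_pos; [lra|apply pow_le; lra]|].
    exact (moment_integrand_outer_le q g r_sq_range g_pos (l + k) a). }
  assert (Hr : forall j, 0 < r ^ j) by (intros; apply pow_lt; lra).
  assert (Hg : forall j, 0 < g ^ j) by (intros; apply pow_lt; lra).
  assert (H2 : forall j, 0 < 2 ^ j) by (intros; apply pow_lt; lra).
  assert (Eq1 : q ^ (a * (l + k + 1)) = r ^ (a * l) * r ^ (a * l) * r ^ (a * k) * r ^ (a * k) * r ^ a * r ^ a)
    by (unfold q; rewrite Rpow_mult_distr, <- !pow_add; f_equal; lia).
  assert (Eq2 : q ^ (a * (a + 1)) = r ^ (a * a) * r ^ (a * a) * r ^ a * r ^ a)
    by (unfold q; rewrite Rpow_mult_distr, <- !pow_add; f_equal; lia).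
  assert (Eg : g ^ (l + k + 1) = g ^ l * g ^ k * g) by (rewrite <- (pow_1 g) at 4; rewrite <- !pow_add; f_equal; lia).
  assert (Eg2 : g ^ (2 * a) = g ^ a * g ^ a) by (rewrite <- pow_add; f_equal; lia).
  assert (Ec : (2 / (g * r ^ (2 * k))) ^ a = 2 ^ a / (g ^ a * (r ^ (a * k) * r ^ (a * k)))).
  { unfold Rdiv; rewrite Rpow_mult_distr, pow_inv, Rpow_mult_distr, <- pow_mult, <- pow_add.
    do 4 f_equal; lia. }
  specialize (Hgauss l a); rewrite !Rpow_mult_distr in Hgauss.
  replace (r ^ (2 * a * l)) with (r ^ (a * l) * r ^ (a * l)) in Hgauss by (rewrite <- pow_add; f_equal; lia).
  set (F := 2 * K * (g ^ k * g) * r ^ (a * a) /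
            (2 ^ l * g ^ a * g ^ a * r ^ (a * l) * r ^ (a * l) * r ^ (a * k) * r ^ (a * k))).
  assert (HF : 0 <= F).
  { unfold F, Rdiv; apply Rmult_le_pos; [repeat apply Rmult_le_pos; try lra; apply Rlt_le; auto|].
    apply Rlt_le, Rinv_0_lt_compat; repeat apply Rmult_lt_0_compat; auto. }
  apply (Rle_trans _ (F * (2 ^ l * g ^ l * r ^ (l * l) * r ^ (a * a)))).
  { right; unfold F; rewrite Eq1, Eq2, Eg, Eg2.
    field; repeat split; apply Rgt_not_eq; unfold Rgt; auto. }
  apply (Rle_trans _ (F * (M * (2 ^ a * g ^ a) * (r ^ (a * l) * r ^ (a * l))))).
  { apply Rmult_le_compat_l; [exact HF|lra]. }
  right; unfold F; rewrite Ec.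
  replace (g ^ (k + 1)) with (g ^ k * g) by (rewrite pow_add; ring).
  rewrite pow_inv; field; repeat split; apply Rgt_not_eq; unfold Rgt; auto.
Qed.

Lemma expansion_inner_swap k :
  (forall l, ex_series (fun n => expansion_term q al k (q ^ n * g) l)) /\
  ex_series (fun l => Series (fun n => expansion_term q al k (q ^ n * g) l)) /\
  Series (fun l => Series (fun n => expansion_term q al k (q ^ n * g) l)) =
  Series (fun n => Series (expansion_term q al k (q ^ n * g))).
Proof.
  pose proof r_sq_range; pose proof al_bound_const_ge0.
  destruct (ex_series_Series_prod (fun n => 2 * K * g ^ (k + 1) * q ^ n) (fun l => g ^ l * r ^ (l * l)))
    as [Hrow Hsum].
  - apply (ex_series_scal_l (V := R_NormedModule)), ex_series_geom; rewrite Rabs_pos_eq; lra.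
  - apply ex_series_gaussian; assumption.
  - exact (Series_Series_swap _ _ (expansion_inner_dominated k) Hrow Hsum).
Qed.

Lemma expansion_outer_swap k :
  (forall l, ex_series (fun n => expansion_term q al k (g / q ^ S n) l)) /\
  ex_series (fun l => Series (fun n => expansion_term q al k (g / q ^ S n) l)) /\
  Series (fun l => Series (fun n => expansion_term q al k (g / q ^ S n) l)) =
  Series (fun n => Series (expansion_term q al k (g / q ^ S n))).
Proof.
  pose proof al_bound_const_ge0.
  destruct (gaussian_square_bound r (2 * g) r_range ltac:(lra)) as [M [HM Hgauss]].
  set (c := 2 / (g * r ^ (2 * k))).
  assert (Hc : 0 < c) by (apply Rdiv_lt_0_compat; [lra|apply Rmult_lt_0_compat; [lra|apply pow_lt; lra]]).
  assert (Hdom : forall n l, Rabs (expansion_term q al k (g / q ^ S n) l) <=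
                             2 * K * M * g ^ (k + 1) * (r ^ (S n * S n) * c ^ S n) * (/ 2) ^ l).
  { intros n l; eapply Rle_trans; [apply (expansion_outer_dominated M k n l Hgauss)|right; unfold c; ring]. }
  destruct (ex_series_Series_prod (fun n => 2 * K * M * g ^ (k + 1) * (r ^ (S n * S n) * c ^ S n))
              (fun l => (/ 2) ^ l)) as [Hrow Hsum].
  - apply (ex_series_scal_l (V := R_NormedModule)).
    apply (ex_series_ext (fun n => c ^ S n * r ^ (S n * S n))); [intros; apply Rmult_comm|].
    apply (ex_series_incr_1 (fun n => c ^ n * r ^ (n * n))), ex_series_gaussian; assumption.
  - apply ex_series_geom; rewrite Rabs_pos_eq; lra.
  - exact (Series_Series_swap _ _ Hdom Hrow Hsum).
Qed.

Lemma jackson_sum_expand k :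
  ex_series (fun l => al l * (parity_factor (l + k) * moment q g (l + k))) /\
  jackson_sum q g (jackson_term q al k) =
    Series (fun l => al l * (parity_factor (l + k) * moment q g (l + k))).
Proof.
  destruct (expansion_inner_swap k) as [Hincol [Hinex Hinswap]].
  destruct (expansion_outer_swap k) as [Houtcol [Houtex Houtswap]].
  assert (Hcol : forall l, Series (fun n => expansion_term q al k (q ^ n * g) l) +
                           Series (fun n => expansion_term q al k (g / q ^ S n) l) =
                           al l * (parity_factor (l + k) * moment q g (l + k))).
  { intros l; unfold expansion_term, moment, jackson_sum.
    set (C := al l * parity_factor (l + k)).
    rewrite (Series_ext _ (fun n => C * moment_integrand q (l + k) (q ^ n * g))) by (intros; unfold C; ring).
    rewrite (Series_ext (fun n => al l * (parity_factor (l + k) * moment_integrand q (l + k) (g / q ^ S n)))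
      (fun n => C * moment_integrand q (l + k) (g / q ^ S n))) by (intros; unfold C; ring).
    rewrite !Series_scal_l; unfold C; ring. }
  split.
  - apply (ex_series_ext _ _ Hcol), (ex_series_plus (V := R_NormedModule)); assumption.
  - unfold jackson_sum at 1.
    rewrite (Series_ext _ _ (fun n => jackson_term_expand k (q ^ n * g))).
    rewrite (Series_ext _ _ (fun n => jackson_term_expand k (g / q ^ S n))).
    rewrite <- Hinswap, <- Houtswap, <- Series_plus by assumption.
    apply Series_ext; exact Hcol.
Qed.

(* For [k = 2 p + r0] only the coefficients [al l] with [l = r0 mod 2] survive, and by
   [moment_even_nu_poly] their sum is [2 A_(2(p+r0))] times a [nu_poly] sum on the grid. *)
Lemma jackson_parity_nu_sums r0 p : (r0 <= 1)%nat ->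
  (forall k, jackson_sum q g (jackson_term q al k) = 0) ->
  Series (fun i => al (2 * i + r0) * nu_poly q (qgrid q r0 p) i) = 0.
Proof.
  intros Hr0 Hzero; pose proof r_sq_range.
  destruct (jackson_sum_expand (2 * p + r0)) as [Hex Heq]; rewrite Hzero in Heq.
  rewrite <- Series_parity_terms with (r0 := r0) in Heq by
    (auto; intros i; replace (2 * i + (1 - r0) + (2 * p + r0))%nat with (2 * (i + p) + 1)%nat by lia;
     rewrite parity_factor_odd; ring).
  rewrite (Series_ext _ (fun i => 2 * moment q g (2 * (p + r0)) *
                                  (al (2 * i + r0) * nu_poly q (qgrid q r0 p) i))) in Heq.
  - rewrite Series_scal_l in Heq.
    pose proof (moment_pos q g r_sq_range g_pos (2 * (p + r0))).
    apply eq_sym, Rmult_integral in Heq; destruct Heq; [lra|assumption].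
  - intros i; replace (2 * i + r0 + (2 * p + r0))%nat with (2 * (i + (p + r0)))%nat by lia.
    rewrite parity_factor_even, moment_even_nu_poly by assumption.
    unfold qgrid; rewrite Nat.add_0_r; ring.
Qed.

Lemma jackson_moments_eq0_coeffs :
  (forall k, jackson_sum q g (jackson_term q al k) = 0) -> forall l, al l = 0.
Proof.
  intros Hzero l; pose proof r_sq_range.
  assert (Hpow : forall n, q ^ n = r ^ (2 * n)) by (intros; unfold q; rewrite Rpow_mult_distr, <- pow_add; f_equal; lia).
  destruct (Nat.Even_or_Odd l) as [[i ->]|[i ->]].
  - apply (nu_poly_coeffs_eq0 q r_sq_range 0 (fun i => al (2 * i)) K).
    + intros j; rewrite !Hpow, Nat.mul_0_l, Nat.mul_0_r, pow_O, Rmult_1_r.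
      eapply Rle_trans; [apply al_bound|right; do 2 f_equal; lia].
    + intros p; rewrite <- (jackson_parity_nu_sums 0 p ltac:(lia) Hzero).
      apply Series_ext; intros; rewrite Nat.add_0_r; reflexivity.
  - apply (nu_poly_coeffs_eq0 q r_sq_range 1 (fun i => al (2 * i + 1)%nat) K).
    + intros j; rewrite !Hpow, Rmult_assoc, <- pow_add; eapply Rle_trans; [apply al_bound|].
      apply Rmult_le_compat_l; [apply al_bound_const_ge0|apply pow_le_pow_anti; [lra|nia]].
    + intros p; exact (jackson_parity_nu_sums 1 p ltac:(lia) Hzero).
Qed.

End JacksonExpansion.

Lemma cpow_RtoC x n : cpow (RtoC x) n = RtoC (x ^ n).
Proof. induction n as [|n IH]; [reflexivity|cbn [cpow]; rewrite IH; apply injective_projections; simpl; ring]. Qed.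

Lemma qpoch_n_real q x n : qpoch_n (Copp (Cmult (RtoC x) (RtoC x))) (q ^ 2) n = RtoC (qpoch_sq q x n).
Proof.
  induction n as [|n IH]; [reflexivity|cbn [qpoch_n qpoch_sq]; rewrite IH].
  apply injective_projections; simpl; ring.
Qed.

Lemma e_q_real q x : 0 < q < 1 -> e_q (q ^ 2) (Copp (Cmult (RtoC x) (RtoC x))) = RtoC (weight q x).
Proof.
  intros Hq; unfold e_q, qpoch_inf.
  rewrite (Lim_seq_ext _ (qpoch_sq q x)) by (intros; rewrite qpoch_n_real; reflexivity).
  rewrite (Lim_seq_ext (fun n => Im (qpoch_n (Copp (Cmult (RtoC x) (RtoC x))) (q ^ 2) n)) (fun _ => 0))
    by (intros; rewrite qpoch_n_real; reflexivity).
  rewrite Lim_seq_const; fold (qpoch_sq_inf q x); pose proof (qpoch_sq_inf_ge1 q Hq x).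
  unfold Cinv, weight; apply injective_projections; simpl; field; lra.
Qed.

Lemma MF_real q a x : 0 < q < 1 ->
  MF q a (RtoC x) = (real_powser (fun l => Re (a l)) x * weight q x,
                     real_powser (fun l => Im (a l)) x * weight q x).
Proof.
  intros Hq; unfold MF; rewrite e_q_real by exact Hq.
  assert (Hf : powser a (RtoC x) = (real_powser (fun l => Re (a l)) x, real_powser (fun l => Im (a l)) x)).
  { unfold powser, CSeries, real_powser; apply injective_projections; simpl;
      apply Series_ext; intros l; rewrite cpow_RtoC; unfold RtoC, Re, Im; simpl; ring. }
  rewrite Hf; apply injective_projections; simpl; ring.
Qed.

Lemma jterm_MF q g0 a k z : 0 < q < 1 ->
  jterm q g0 (fun x => Cmult (MF q a (RtoC x)) (RtoC (x ^ k))) z =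
  (jackson_term q (fun l => Re (a l)) k (powerRZ q z * g0),
   jackson_term q (fun l => Im (a l)) k (powerRZ q z * g0)).
Proof.
  intros Hq; unfold jterm, jackson_term; rewrite !MF_real by exact Hq.
  apply injective_projections; simpl; ring.
Qed.

Lemma jackson_MF q g0 a k : 0 < q < 1 ->
  jackson q g0 (fun x => Cmult (MF q a (RtoC x)) (RtoC (x ^ k))) =
  ((1 - q) * jackson_sum q g0 (jackson_term q (fun l => Re (a l)) k),
   (1 - q) * jackson_sum q g0 (jackson_term q (fun l => Im (a l)) k)).
Proof.
  intros Hq; unfold jackson, CSeries, jackson_sum.
  assert (Hin : forall n, powerRZ q (Z.of_nat n) * g0 = q ^ n * g0)
    by (intros; rewrite <- pow_powerRZ; reflexivity).
  assert (Hout : forall n, powerRZ q (- Z.of_nat (S n)) * g0 = g0 / q ^ S n).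
  { intros n; simpl; rewrite SuccNat2Pos.id_succ; unfold Rdiv; apply Rmult_comm. }
  set (F := fun x => Cmult (MF q a (RtoC x)) (RtoC (x ^ k))).
  set (re := fun l => Re (a l)); set (im := fun l => Im (a l)).
  assert (E1 : forall n, Re (jterm q g0 F (Z.of_nat n)) = jackson_term q re k (q ^ n * g0))
    by (intros; unfold F; rewrite jterm_MF, Hin by exact Hq; reflexivity).
  assert (E2 : forall n, Re (jterm q g0 F (- Z.of_nat (S n))) = jackson_term q re k (g0 / q ^ S n))
    by (intros; unfold F; rewrite jterm_MF, Hout by exact Hq; reflexivity).
  assert (E3 : forall n, Im (jterm q g0 F (Z.of_nat n)) = jackson_term q im k (q ^ n * g0))
    by (intros; unfold F; rewrite jterm_MF, Hin by exact Hq; reflexivity).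
  assert (E4 : forall n, Im (jterm q g0 F (- Z.of_nat (S n))) = jackson_term q im k (g0 / q ^ S n))
    by (intros; unfold F; rewrite jterm_MF, Hout by exact Hq; reflexivity).
  rewrite (Series_ext _ _ E1), (Series_ext _ _ E2), (Series_ext _ _ E3), (Series_ext _ _ E4).
  apply injective_projections; simpl; ring.
Qed.

Lemma Im_le_Cmod (c : C) : Rabs (Im c) <= Cmod c.
Proof.
  unfold Cmod; rewrite <- sqrt_Rsqr_abs; apply sqrt_le_1_alt.
  unfold Rsqr, Im; pose proof (pow2_ge_0 (fst c)); nra.
Qed.

Lemma Ms_coeff_bound_sqrt q s Cst a : 0 < q -> 0 < s < 1 -> 0 <= Cst ->
  Ms_coeff_bound q s Cst a -> forall l, Cmod (a l) <= Cst * sqrt q ^ (l * l).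
Proof.
  intros Hq Hs HC Hb l; eapply Rle_trans; [apply Hb|].
  replace (Rpower q (INR (l * l) / 2)) with (sqrt q ^ (l * l)).
  - pose proof (pow_le_1 s l ltac:(lra)); pose proof (pow_le s l ltac:(lra)).
    pose proof (pow_le (sqrt q) (l * l) (sqrt_pos q)).
    rewrite Rmult_assoc; apply Rmult_le_compat_l; [exact HC|nra].
  - rewrite <- Rpower_sqrt, <- Rpower_pow, Rpower_mult by (try apply exp_pos; exact Hq).
    f_equal; field.
Qed.

Theorem lemma5p10 (q s gamma Cst : R) (a : nat -> C) :
  0 < q < 1 -> 0 < s < 1 -> 0 < gamma -> 0 < Cst ->
  Ms_coeff_bound q s Cst a ->
  (forall k : nat,
      let g := fun x : R => Cmult (MF q a (RtoC x)) (RtoC (x ^ k)) in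
      jackson_abs_conv q gamma g /\ jackson q gamma g = RtoC 0) ->
  forall z : C, Rabs (Im z) < 1 -> MF q a z = RtoC 0.
Proof.
  (* All coefficients vanish. *)
  intros Hq Hs Hgamma HC Hb Hj z _.
  set (r := sqrt q).
  assert (Hrr : r * r = q) by (apply sqrt_sqrt; lra).
  assert (Hr : 0 < r < 1) by (split; [apply sqrt_lt_R0|rewrite <- sqrt_1; apply sqrt_lt_1]; lra).
  pose proof (Ms_coeff_bound_sqrt q s Cst a (proj1 Hq) Hs (Rlt_le _ _ HC) Hb) as Hcoef.
  assert (Hparts : forall k, jackson_sum (r * r) gamma (jackson_term (r * r) (fun l => Re (a l)) k) = 0 /\
                             jackson_sum (r * r) gamma (jackson_term (r * r) (fun l => Im (a l)) k) = 0).
  { intros k; destruct (Hj k) as [_ Hk]; rewrite jackson_MF in Hk by exact Hq.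
    unfold RtoC in Hk; injection Hk as Hre Him; rewrite Hrr.
    apply Rmult_integral in Hre; apply Rmult_integral in Him.
    destruct Hre, Him; split; lra. }
  assert (Ha : forall l, a l = RtoC 0).
  { intros l; apply injective_projections; simpl.
    - apply (jackson_moments_eq0_coeffs r gamma Cst (fun l => Re (a l)) Hr Hgamma);
        [intros; eapply Rle_trans; [apply re_le_Cmod|apply Hcoef]|intros; apply Hparts].
    - apply (jackson_moments_eq0_coeffs r gamma Cst (fun l => Im (a l)) Hr Hgamma);
        [intros; eapply Rle_trans; [apply Im_le_Cmod|apply Hcoef]|intros; apply Hparts]. }
  unfold MF, powser, CSeries.
  rewrite (Series_ext _ (fun _ => 0)), (Series_ext (fun n => Im (Cmult (a n) (cpow z n))) (fun _ => 0)), Series_zero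
    by (intros; rewrite Ha; unfold Cmult, Re, Im; simpl; ring).
  apply injective_projections; simpl; ring.
Qed.
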